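(* For every countable ordinal $\alpha$ there is a position in the variant of infinite draughts played with the forced-jump rule but without the forced-iterated-jump rule, whose game value, with Red as the open player, is exactly $\alpha$.
   Context: Infinite draughts is played by two players, Black and Red, on the infinite checkerboard $\mathbb{Z}\times\mathbb{Z}$, using only the dark squares (say those $(x,y)$ with $x+y$ even). A position consists of an arbitrary (possibly infinite) placement of pieces on dark squares, each piece being a black or red pawn or king, together with a specification of which player is to move. Black pawns move only on upward diagonals, red pawns only on downward diagonals; kings may move along all four diagonal directions. A simple move moves a piece one diagonal step, in a permitted direction, to an empty square. A jump moves a piece over a diagonally adjacent enemy piece (in a permitted direction) to the empty square immediately beyond; the jumped enemy piece is captured and removed. A single piece may perform several jumps in succession (an iterated jump), which together count as one turn. If a piece performs an infinite iterated jump, then all enemy pieces jumped are removed and the jumping piece itself is also removed from the board. There is no promotion of pawns. A player loses when it is their turn and they have no legal move; the other player then wins. Infinitely long play is a draw. In the variant considered here: the forced-jump rule is in effect (if a player has any jumping move available, the player must make a jumping move), but the forced-iterated-jump rule is not: after making at least one jump, the player may stop the iterated jump at any point, or continue (possibly infinitely). Game values (with respect to a designated ''open'' player, here Red) are defined by transfinite recursion: (1) a position in which the game is already won for the open player has value $0$; (2) if the game is not yet won and it is the open player's turn, and the open player can move to a position having a value, then the value is $\alpha+1$ where $\alpha$ is the least value of a position reachable in one legal move; (3) if it is the closed player's turn and every position reachable by a legal move has a value, then the value is the supremum of those values; otherwise the value is undefined. *)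

From Stdlib Require Import ZArith List Bool.
Open Scope Z_scope.

Inductive Ord : Type :=
| OZ : Ord
| OS : Ord -> Ord
| OL : forall (I : Type), (I -> Ord) -> Ord.

Inductive ole : Ord -> Ord -> Prop :=
| ole_zero : forall b, ole OZ b
| ole_succ : forall a b, olt a b -> ole (OS a) b
| ole_lim : forall I (f : I -> Ord) b, (forall i, ole (f i) b) -> ole (OL I f) b
with olt : Ord -> Ord -> Prop :=
| olt_succ : forall a b, ole a b -> olt a (OS b)
| olt_lim : forall a I (f : I -> Ord) (i : I), olt a (f i) -> olt a (OL I f).

Definition oeq (a b : Ord) : Prop := ole a b /\ ole b a.

(* Countable ordinals: exactly those denoted by omega-branching trees. *)
Inductive CTree : Type :=
| CZ : CTree
| CS : CTree -> CTree
| CL : (nat -> CTree) -> CTree.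

Fixpoint embed (c : CTree) : Ord :=
  match c with
  | CZ => OZ
  | CS c' => OS (embed c')
  | CL f => OL nat (fun n => embed (f n))
  end.

Definition countable_ordinal (a : Ord) : Prop := exists c : CTree, oeq a (embed c).

Inductive color : Type := Black | Red.
Inductive kind : Type := Pawn | King.
Record piece : Type := mkPiece { pcol : color; pkind : kind }.

Definition opp (c : color) : color := match c with Black => Red | Red => Black end.

Definition board := Z -> Z -> option piece.

Record position : Type := mkPos { brd : board; to_move : color }.

Definition valid_pos (p : position) : Prop :=
  forall x y, Z.odd (x + y) = true -> brd p x y = None.

Inductive dir : Type := NE | NW | SE | SW.
Definition dx (d : dir) : Z := match d with NE | SE => 1 | NW | SW => -1 end.
Definition dy (d : dir) : Z := match d with NE | NW => 1 | SE | SW => -1 end.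

Definition permitted (pc : piece) (d : dir) : Prop :=
  match pkind pc with
  | King => True
  | Pawn => match pcol pc with Black => dy d = 1 | Red => dy d = -1 end
  end.

Definition upd (b : board) (x y : Z) (v : option piece) : board :=
  fun x' y' => if (x' =? x) && (y' =? y) then v else b x' y'.

Definition simple_move (p q : position) : Prop :=
  exists x y pc d,
    brd p x y = Some pc /\ pcol pc = to_move p /\ permitted pc d /\
    brd p (x + dx d) (y + dy d) = None /\
    q = mkPos (upd (upd (brd p) x y None) (x + dx d) (y + dy d) (Some pc))
              (opp (to_move p)).

(* state of an iterated jump: current board and current square of the jumper *)
Definition jstate := (board * Z * Z)%type.

Definition jump_ok (pc : piece) (st : jstate) (d : dir) : Prop :=
  let '(b, x, y) := st in
  permitted pc d /\
  (exists e, b (x + dx d) (y + dy d) = Some e /\ pcol e <> pcol pc) /\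
  b (x + 2 * dx d) (y + 2 * dy d) = None.

Definition jump_step (pc : piece) (st : jstate) (d : dir) : jstate :=
  let '(b, x, y) := st in
  (upd (upd (upd b x y None) (x + dx d) (y + dy d) None)
       (x + 2 * dx d) (y + 2 * dy d) (Some pc),
   x + 2 * dx d, y + 2 * dy d).

Fixpoint jumps_ok (pc : piece) (st : jstate) (ds : list dir) : Prop :=
  match ds with
  | nil => True
  | d :: ds' => jump_ok pc st d /\ jumps_ok pc (jump_step pc st d) ds'
  end.

Definition jumps_result (pc : piece) (st : jstate) (ds : list dir) : jstate :=
  fold_left (jump_step pc) ds st.

(* finite iterated jump consisting of at least one jump; the player may stop
   at any point (no forced-iterated-jump rule) *)
Definition finite_jump_move (p q : position) : Prop :=
  exists x y pc (ds : list dir),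
    brd p x y = Some pc /\ pcol pc = to_move p /\ ds <> nil /\
    jumps_ok pc (brd p, x, y) ds /\
    (let '(b, _, _) := jumps_result pc (brd p, x, y) ds in
     q = mkPos b (opp (to_move p))).

Fixpoint jiter (pc : piece) (st0 : jstate) (s : nat -> dir) (n : nat) : jstate :=
  match n with
  | O => st0
  | S n' => jump_step pc (jiter pc st0 s n') (s n')
  end.

(* infinite iterated jump: all jumped enemy pieces are removed and the
   jumping piece itself is removed from the board *)
Definition infinite_jump_move (p q : position) : Prop :=
  exists x y pc (s : nat -> dir),
    brd p x y = Some pc /\ pcol pc = to_move p /\
    (forall n, jump_ok pc (jiter pc (brd p, x, y) s n) (s n)) /\
    to_move q = opp (to_move p) /\
    (forall u v,
        let removed :=
          (u = x /\ v = y) \/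
          (exists n, let '(_, xn, yn) := jiter pc (brd p, x, y) s n in
                     u = xn + dx (s n) /\ v = yn + dy (s n)) in
        (removed -> brd q u v = None) /\ (~ removed -> brd q u v = brd p u v)).

Definition jump_move (p q : position) : Prop :=
  finite_jump_move p q \/ infinite_jump_move p q.

Definition legal_move (p q : position) : Prop :=
  jump_move p q \/ ((~ exists q', jump_move p q') /\ simple_move p q).

Definition won_for_red (p : position) : Prop :=
  to_move p = Black /\ ~ exists q, legal_move p q.

(* the three clauses of the transfinite recursive definition, for a
   candidate relation F (F a p : "p has value a") *)
Definition value_clause (F : Ord -> position -> Prop) (a : Ord) (p : position) : Prop :=
  (won_for_red p /\ oeq a OZ)
  \/ (~ won_for_red p /\ to_move p = Red /\
      exists q b, legal_move p q /\ F b q /\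
        (forall q' c, legal_move p q' -> F c q' -> ole b c) /\
        oeq a (OS b))
  \/ (~ won_for_red p /\ to_move p = Black /\
      (forall q, legal_move p q -> exists b, F b q) /\
      (forall q b, legal_move p q -> F b q -> ole b a) /\
      (forall c, (forall q b, legal_move p q -> F b q -> ole b c) -> ole a c)).

(* F solves the recursion (the solution is unique, and is the value relation) *)
Definition value_solution (F : Ord -> position -> Prop) : Prop :=
  forall a p, F a p <-> value_clause F a p.

Definition has_value (p : position) (a : Ord) : Prop :=
  exists F, value_solution F /\ F a p.

(* The countable tree c denoting the ordinal is drawn on the board.  A black
   king stands at the root of a node; the vertices of the drawing are empty
   squares, and each edge is a red pawn that the king captures by jumping one
   row up.  All other squares near the drawing hold red pawns, so the king can
   land only on vertices, and it cannot move down because the edges below it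
   have been eaten.  If the king stops anywhere but at the root of an inner
   node, a red pawn captures it and Black, left with blocked pawns only, loses
   (an infinite iterated jump removes the king, to the same effect).  Red
   always has a "fuel" jump far to the left which changes nothing else, and
   when the king stands at the root of an inner node this is Red's only legal
   move.  Hence the value of the position with the king at the root of a node
   d is the supremum of (value at d') + 1 over the children d' of d, that is,
   the ordinal denoted by d.

   For the king never to jump from one branch into another, two branches must
   stay at horizontal distance at least 2 at every height, except just above
   the point where a child leaves its parent ([col_sep]); slopes and heights
   of the drawing grow fast enough with the address to ensure this. *)

From Stdlib Require Import ZArith List Lia Relations Classical ClassicalEpsilon FunctionalExtensionality Bool.
From Stdlib Require Cantor.
Import ListNotations.

(** * Brouwer ordinals *)

Scheme ole_mut := Induction for ole Sort Prop
with olt_mut := Induction for olt Sort Prop.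

Lemma ole_inv x b : ole x b ->
  match x with OZ => True | OS a => olt a b | OL J g => forall i, ole (g i) b end.
Proof. intros H; destruct H; auto. Qed.

Lemma olt_inv a y : olt a y ->
  match y with OZ => False | OS b => ole a b | OL J g => exists i, olt a (g i) end.
Proof. intros H; destruct H; eauto. Qed.

Lemma ole_lim_r I (f : I -> Ord) i x : ole x (f i) -> ole x (OL I f).
Proof.
  induction x as [|x IH|J g IH]; intros H.
  - constructor.
  - apply ole_inv in H. constructor. eapply olt_lim; eauto.
  - apply ole_inv in H. constructor. intros j. apply IH. apply H.
Qed.

Lemma ole_refl x : ole x x.
Proof.
  induction x as [|x IH|J g IH].
  - constructor.
  - constructor. constructor. exact IH.
  - constructor. intros j. eapply ole_lim_r. apply IH.
Qed.

Lemma ole_trans_aux :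
  (forall a b, ole a b -> forall c, ole b c -> ole a c) /\
  (forall a b, olt a b -> forall c, ole b c -> olt a c).
Proof.
  assert (L : forall a b, (forall c', ole b c' -> ole a c') -> forall c, olt b c -> olt a c).
  { intros a b H c; induction c as [|c IH|J g IH]; intros Hc; apply olt_inv in Hc.
    - destruct Hc.
    - constructor. apply H. exact Hc.
    - destruct Hc as [i Hi]. eapply olt_lim. apply IH. exact Hi. }
  split.
  - apply (ole_mut (fun a b _ => forall c, ole b c -> ole a c)
                   (fun a b _ => forall c, ole b c -> olt a c)).
    + intros; constructor.
    + intros a b H IH c Hc. constructor. apply IH. exact Hc.
    + intros I f b H IH c Hc. constructor. intros i. apply IH. exact Hc.
    + intros a b H IH c Hc. apply ole_inv in Hc. eapply L; eauto.
    + intros a I f i H IH c Hc. apply ole_inv in Hc. apply IH. apply Hc.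
  - apply (olt_mut (fun a b _ => forall c, ole b c -> ole a c)
                   (fun a b _ => forall c, ole b c -> olt a c)).
    + intros; constructor.
    + intros a b H IH c Hc. constructor. apply IH. exact Hc.
    + intros I f b H IH c Hc. constructor. intros i. apply IH. exact Hc.
    + intros a b H IH c Hc. apply ole_inv in Hc. eapply L; eauto.
    + intros a I f i H IH c Hc. apply ole_inv in Hc. apply IH. apply Hc.
Qed.

Lemma ole_trans a b c : ole a b -> ole b c -> ole a c.
Proof. intros; eapply (proj1 ole_trans_aux); eauto. Qed.
Lemma olt_ole_trans a b c : olt a b -> ole b c -> olt a c.
Proof. intros; eapply (proj2 ole_trans_aux); eauto. Qed.
Lemma ole_olt_trans a b c : ole a b -> olt b c -> olt a c.
Proof.
  intros H1 H2. revert H2. induction c as [|c IH|J g IH]; intros H2; apply olt_inv in H2.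
  - destruct H2.
  - constructor. eapply ole_trans; eauto.
  - destruct H2 as [i Hi]. eapply olt_lim. apply IH. exact Hi.
Qed.

Lemma olt_ole_aux :
  (forall x y, ole x y -> ole x (OS y)) /\ (forall x y, olt x y -> olt x (OS y) /\ ole x y).
Proof.
  split.
  - apply (ole_mut (fun x y _ => ole x (OS y)) (fun x y _ => olt x (OS y) /\ ole x y)).
    + intros; constructor.
    + intros a b H [IH1 IH2]. constructor. exact IH1.
    + intros I f b H IH. constructor. exact IH.
    + intros a b H IH. split; [constructor; exact IH | exact IH].
    + intros a I f i H [IH1 IH2]. assert (ole a (OL I f)) by (eapply ole_lim_r; eauto).
      split; [constructor|]; auto.
  - apply (olt_mut (fun x y _ => ole x (OS y)) (fun x y _ => olt x (OS y) /\ ole x y)).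
    + intros; constructor.
    + intros a b H [IH1 IH2]. constructor. exact IH1.
    + intros I f b H IH. constructor. exact IH.
    + intros a b H IH. split; [constructor; exact IH | exact IH].
    + intros a I f i H [IH1 IH2]. assert (ole a (OL I f)) by (eapply ole_lim_r; eauto).
      split; [constructor|]; auto.
Qed.

Lemma olt_ole a b : olt a b -> ole a b.
Proof. intros H; apply (proj2 olt_ole_aux) in H; tauto. Qed.

Lemma olt_wf : well_founded olt.
Proof.
  assert (H : forall a x, olt x a -> Acc olt x).
  { induction a as [|a IH|J g IH]; intros x Hx; apply olt_inv in Hx.
    - destruct Hx.
    - constructor. intros z Hz. apply IH. eapply olt_ole_trans; eauto.
    - destruct Hx as [i Hi]. eapply IH; eauto. }
  intros a. constructor. intros y Hy. eapply H; eauto.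
Qed.

Lemma ole_or_gt_S x y : (ole y x \/ olt x y) -> (ole (OS x) y \/ olt y (OS x)).
Proof. intros [H|H]; [right; constructor; exact H| left; constructor; exact H]. Qed.
Lemma ole_or_gt_lim I (f : I -> Ord) y : (forall i, ole (f i) y \/ olt y (f i)) -> ole (OL I f) y \/ olt y (OL I f).
Proof.
  intros H. destruct (classic (forall i, ole (f i) y)) as [H1|H1].
  - left; constructor; exact H1.
  - apply not_all_ex_not in H1. destruct H1 as [i Hi]. right. eapply olt_lim.
    destruct (H i); [contradiction|eauto].
Qed.

Lemma ole_total_aux : forall x y, (ole x y \/ olt y x) /\ (ole y x \/ olt x y).
Proof.
  intros x; induction x as [|x IHx|I f IHx]; intros y; induction y as [|y IHy|J g IHy]; split.
  all: first [ left; apply ole_zero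
             | apply ole_or_gt_S; solve [apply (proj2 (IHx _)) | apply (proj1 IHy)]
             | apply ole_or_gt_lim; intros; solve [apply (proj1 (IHx _ _)) | apply (proj2 (IHy _))] ].
Qed.

Lemma ole_total x y : ole x y \/ olt y x.
Proof. apply ole_total_aux. Qed.

Lemma ord_least (P : Ord -> Prop) a : P a -> exists b, P b /\ forall c, P c -> ole b c.
Proof.
  induction a as [a IH] using (well_founded_ind olt_wf). intros Pa.
  destruct (classic (forall c, P c -> ole a c)) as [H|H].
  - exists a; auto.
  - apply not_all_ex_not in H. destruct H as [c Hc].
    apply imply_to_and in Hc. destruct Hc as [Pc Hc].
    destruct (ole_total a c) as [H|H]; [contradiction|]. eapply IH; eauto.
Qed.

(** * Game values *)

(* [red_wins_by a p]: Red can force a win from [p] in such a way that the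
   value is at most [a]. *)
Inductive red_wins_by : Ord -> position -> Prop :=
| win_now : forall a p, won_for_red p -> red_wins_by a p
| win_by_red_move : forall a p q b, ~ won_for_red p -> to_move p = Red ->
    legal_move p q -> red_wins_by b q -> olt b a -> red_wins_by a p
| win_by_black_moves : forall a p, ~ won_for_red p -> to_move p = Black ->
    (forall q, legal_move p q -> red_wins_by a q) -> red_wins_by a p.

Lemma red_wins_by_mono a p : red_wins_by a p -> forall c, ole a c -> red_wins_by c p.
Proof.
  induction 1 as [a p H|a p q b H1 H2 H3 H4 IH H5|a p H1 H2 H3 IH]; intros c Hc.
  - apply win_now; auto.
  - eapply win_by_red_move; eauto. eapply olt_ole_trans; eauto.
  - apply win_by_black_moves; auto.
Qed.

Lemma red_wins_by_black_inv a p : red_wins_by a p -> to_move p = Black -> ~ won_for_red p ->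
  forall q, legal_move p q -> red_wins_by a q.
Proof. intros H Ht Hw. inversion H; subst; try contradiction; try congruence; auto. Qed.

Lemma red_wins_by_red_inv a p : red_wins_by a p -> to_move p = Red ->
  exists q b, legal_move p q /\ red_wins_by b q /\ olt b a.
Proof.
  intros H Ht. inversion H; subst.
  - destruct H0 as [H0 _]. congruence.
  - eauto.
  - congruence.
Qed.

Lemma not_won_red b : ~ won_for_red (mkPos b Red).
Proof. intros [H _]. discriminate. Qed.

Lemma red_wins_by_move_to_won a p q : olt OZ a -> to_move p = Red -> legal_move p q -> won_for_red q ->
  red_wins_by a p.
Proof.
  intros Ha Ht Hq Hw. apply win_by_red_move with q OZ; auto; [|apply win_now; auto].
  intros [H _]. congruence.
Qed.

Definition red_value (a : Ord) (p : position) : Prop :=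
  red_wins_by a p /\ forall c, red_wins_by c p -> ole a c.

Lemma red_value_exists a p : red_wins_by a p -> exists b, red_value b p.
Proof.
  intros H. destruct (ord_least (fun c => red_wins_by c p) a H) as [b [Hb1 Hb2]].
  exists b; split; auto.
Qed.

Lemma red_value_clause a p : red_value a p -> value_clause red_value a p.
Proof.
  intros [HW Hm]. destruct (classic (won_for_red p)) as [Hw|Hw].
  { left. split; auto. split; [apply Hm; apply win_now; auto| constructor]. }
  destruct (to_move p) eqn:Ht.
  - right; right. inversion HW; subst; try contradiction; try congruence.
    split; [auto|]. split; [auto|]. split; [|split].
    + intros q Hq. apply red_value_exists with a. auto.
    + intros q b Hq [Hb1 Hb2]. apply Hb2. auto.
    + intros c Hc. apply Hm. apply win_by_black_moves; auto. intros q Hq.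
      destruct (red_value_exists a q) as [b Hb]; auto.
      apply red_wins_by_mono with b; [apply Hb| apply (Hc q b Hq Hb)].
  - right; left. inversion HW; subst; try contradiction; try congruence.
    rename q into q0, b into b0.
    destruct (ord_least (fun c => exists q, legal_move p q /\ red_wins_by c q) b0)
      as [b [[q [Hq Hbq]] Hmin]]; [eauto|].
    split; [auto|]. split; [auto|]. exists q, b. split; [auto|]. split.
    { split; auto. intros c Hc. apply Hmin. eauto. }
    split.
    { intros q' c Hq' [Hc1 Hc2]. apply Hmin; eauto. }
    split.
    + apply Hm. eapply win_by_red_move; eauto. constructor. apply ole_refl.
    + constructor. eapply ole_olt_trans; [|eauto]. apply Hmin; eauto.
Qed.

Lemma red_value_of_clause a p : value_clause red_value a p -> red_value a p.
Proof.
  intros [[Hw Heq]|[[Hw [Ht [q [b [Hq [Hb [Hmin Heq]]]]]]]|[Hw [Ht [H1 [H2 H3]]]]]].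
  - split; [apply win_now; auto|]. intros c _. eapply ole_trans; [apply Heq|constructor].
  - split.
    + apply win_by_red_move with q b; auto; [apply Hb|].
      destruct Heq as [_ He]. apply ole_inv in He. exact He.
    + intros c Hc. inversion Hc; subst; try contradiction; try congruence.
      destruct (red_value_exists b0 q0) as [b'' Hb'']; auto.
      assert (ole b b'') by (eapply Hmin; eauto).
      assert (ole b'' b0) by (apply Hb''; auto).
      eapply ole_trans; [apply Heq|]. constructor.
      eapply ole_olt_trans; [|eauto]. eapply ole_trans; eauto.
  - split.
    + apply win_by_black_moves; auto. intros q Hq. destruct (H1 q Hq) as [b Hb].
      apply red_wins_by_mono with b; [apply Hb| apply (H2 q b Hq Hb)].
    + intros c Hc. inversion Hc; subst; try contradiction; try congruence.
      apply H3. intros q b Hq [Hb1 Hb2]. apply Hb2. auto.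
Qed.

Lemma red_value_solution : value_solution red_value.
Proof. split; [apply red_value_clause|apply red_value_of_clause]. Qed.

Lemma red_value_oeq a b p : red_value a p -> oeq a b -> red_value b p.
Proof.
  intros [H1 H2] [H3 H4]. split.
  - eapply red_wins_by_mono; eauto.
  - intros c Hc. eapply ole_trans; [exact H4|]. auto.
Qed.

(** * Countable trees *)

(* The children of a tree, enumerated by [nat]; through limit nodes, that is
   through [CL f], one reaches the children of all the [f i], interleaved by
   Cantor pairing.  The ordinal [embed c] is then the supremum of the
   [embed d + 1] over the children [d]. *)
Fixpoint child (c : CTree) (n : nat) : option CTree :=
  match c with
  | CZ => None
  | CS d => match n with O => Some d | _ => None end
  | CL f => let (i, j) := Cantor.of_nat n in child (f i) j
  end.

Lemma embed_child_sup c :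
  (forall n d, child c n = Some d -> ole (OS (embed d)) (embed c)) /\
  (forall b, (forall n d, child c n = Some d -> ole (OS (embed d)) b) -> ole (embed c) b).
Proof.
  induction c as [|c IH|f IH].
  - split; [intros n d H; discriminate| intros; constructor].
  - split.
    + intros [|n] d H; simpl in H; [|discriminate]. inversion H; subst. apply ole_refl.
    + intros b Hb. apply (Hb 0%nat). reflexivity.
  - split.
    + intros n d H. simpl in H. destruct (Cantor.of_nat n) as [i j] eqn:E.
      simpl. eapply ole_lim_r. apply (proj1 (IH i) j). exact H.
    + intros b Hb. simpl. constructor. intros i. apply (proj2 (IH i)).
      intros j d Hd. apply (Hb (Cantor.to_nat (i, j))). unfold child; fold child.
      rewrite Cantor.cancel_of_to. exact Hd.
Qed.

Definition has_child c := exists n d, child c n = Some d.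

Lemma embed_childless c : ~ has_child c -> ole (embed c) OZ.
Proof.
  intros H. apply (proj2 (embed_child_sup c)). intros n d Hd. exfalso; apply H; exists n, d; exact Hd.
Qed.

Lemma one_le_S x : ole (OS OZ) (OS x).
Proof. constructor. constructor. constructor. Qed.

Lemma embed_has_child c : has_child c -> ole (OS OZ) (embed c).
Proof.
  intros [n [d H]]. eapply ole_trans; [apply one_le_S|]. apply (proj1 (embed_child_sup c) n d H).
Qed.

Lemma child_ind (P : CTree -> Prop) :
  (forall c, (forall n d, child c n = Some d -> P d) -> P c) -> forall c, P c.
Proof.
  intros Hs c.
  assert (H : P c /\ forall n d, child c n = Some d -> P d).
  { induction c as [|c IH|f IH].
    - split; [apply Hs|]; intros n d Hd; discriminate.
    - assert (K : forall n d, child (CS c) n = Some d -> P d).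
      { intros [|n] d Hd; simpl in Hd; [|discriminate]. inversion Hd; subst. apply IH. }
      split; auto.
    - assert (K : forall n d, child (CL f) n = Some d -> P d).
      { intros n d Hd; simpl in Hd. destruct (Cantor.of_nat n) as [i j].
        apply (proj2 (IH i) j). exact Hd. }
      split; auto. }
  apply H.
Qed.

Fixpoint subtree (c : CTree) (σ : list nat) : option CTree :=
  match σ with
  | [] => Some c
  | n :: σ' => match child c n with Some d => subtree d σ' | None => None end
  end.

Lemma subtree_snoc c σ b : subtree c (σ ++ [b]) = match subtree c σ with Some d => child d b | None => None end.
Proof.
  revert c; induction σ as [|n σ IH]; intros c; simpl.
  - destruct (child c b); reflexivity.
  - destruct (child c n); [apply IH|reflexivity].
Qed.

Lemma subtree_app_None c σ ρ : subtree c σ = None -> subtree c (σ ++ ρ) = None.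
Proof.
  revert c; induction σ as [|n σ IH]; intros c H; simpl in *; [discriminate|].
  destruct (child c n); [apply IH; auto|reflexivity].
Qed.

(** * Drawing the tree in the plane *)

Open Scope Z_scope.

(* [layout σ = (e, a, s)]: the node σ is drawn above its root, at height [s],
   as the ray of slope [a / 2^e] through the origin, rounded down.  The child
   [b] gets the slope [a / 2^e + 1 / 2^(e+b+1)], decreasing to its parent's as
   [b] grows, and a root height that is a multiple of its own denominator. *)
Definition layout_step (p : Z*Z*Z) (n : nat) : Z*Z*Z :=
  let '(e, a, s) := p in
  let k := Z.of_nat n + 1 in
  (e + k, a * 2 ^ k + 1, (s + 1) * (2 ^ e - a) * 2 ^ (e + k)).
Definition layout (σ : list nat) := fold_left layout_step σ (3, 0, 0).
Definition den_log σ := fst (fst (layout σ)).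
Definition slope_num σ := snd (fst (layout σ)).
Definition root_ht σ := snd (layout σ).
Definition slope_den σ := 2 ^ den_log σ.

Lemma layout_snoc σ b : layout (σ ++ [b]) = layout_step (layout σ) b.
Proof. unfold layout. rewrite fold_left_app. reflexivity. Qed.

Lemma den_log_snoc σ b : den_log (σ ++ [b]) = den_log σ + (Z.of_nat b + 1).
Proof. unfold den_log. rewrite layout_snoc. destruct (layout σ) as [[e a] s]. reflexivity. Qed.
Lemma slope_num_snoc σ b : slope_num (σ ++ [b]) = slope_num σ * 2 ^ (Z.of_nat b + 1) + 1.
Proof. unfold slope_num. rewrite layout_snoc. destruct (layout σ) as [[e a] s]. reflexivity. Qed.
Lemma root_ht_snoc σ b : root_ht (σ ++ [b]) = (root_ht σ + 1) * (slope_den σ - slope_num σ) * slope_den (σ ++ [b]).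
Proof. unfold root_ht, slope_den. rewrite den_log_snoc. unfold den_log, slope_num, root_ht. rewrite layout_snoc. destruct (layout σ) as [[e a] s]. reflexivity. Qed.

Lemma den_log_nil : den_log [] = 3. Proof. reflexivity. Qed.
Lemma slope_num_nil : slope_num [] = 0. Proof. reflexivity. Qed.
Lemma root_ht_nil : root_ht [] = 0. Proof. reflexivity. Qed.
Lemma slope_den_nil : slope_den [] = 8. Proof. reflexivity. Qed.

Lemma den_log_ge3 σ : 3 <= den_log σ.
Proof.
  induction σ as [|b σ IH] using rev_ind; [rewrite den_log_nil; lia|]. rewrite den_log_snoc. lia.
Qed.

Lemma slope_den_snoc σ b : slope_den (σ ++ [b]) = slope_den σ * 2 ^ (Z.of_nat b + 1).
Proof. unfold slope_den. rewrite den_log_snoc. rewrite Z.pow_add_r; [reflexivity| pose proof (den_log_ge3 σ); lia | lia]. Qed.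

Lemma pow2_succ_ge2 b : 2 <= 2 ^ (Z.of_nat b + 1).
Proof.
  rewrite Z.pow_add_r by lia. rewrite Z.pow_1_r.
  pose proof (Z.pow_pos_nonneg 2 (Z.of_nat b)). lia.
Qed.

Lemma layout_bounds σ : 0 <= slope_num σ /\ 8 * (slope_num σ + 1) <= slope_den σ /\ 0 <= root_ht σ.
Proof.
  induction σ as [|b σ IH] using rev_ind.
  - rewrite slope_num_nil, slope_den_nil, root_ht_nil. lia.
  - rewrite slope_num_snoc, slope_den_snoc, root_ht_snoc, slope_den_snoc. pose proof (pow2_succ_ge2 b).
    set (K := 2 ^ (Z.of_nat b + 1)) in *. destruct IH as (H1 & H2 & H3).
    assert (0 <= slope_num σ * K) by nia.
    split; [lia|]. split; [nia|].
    assert (0 < slope_den σ - slope_num σ) by lia. assert (0 < slope_den σ * K) by nia.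
    apply Z.mul_nonneg_nonneg; [|lia]. apply Z.mul_nonneg_nonneg; lia.
Qed.

Lemma slope_num_ge0 σ : 0 <= slope_num σ. Proof. apply layout_bounds. Qed.
Lemma slope_den_ge σ : 8 * (slope_num σ + 1) <= slope_den σ. Proof. apply layout_bounds. Qed.
Lemma root_ht_ge0 σ : 0 <= root_ht σ. Proof. apply layout_bounds. Qed.

(* A node other than the root leaves its parent's ray at height [branch_ht],
   where the parent's column [branch_col] is exact, and climbs with slope 1
   up to its own root. *)
Definition branch_ht τ := let σ := removelast τ in (root_ht σ + 1) * slope_den σ * (slope_den τ - slope_num τ).
Definition branch_col τ := let σ := removelast τ in (root_ht σ + 1) * (slope_den τ - slope_num τ) * slope_num σ.
Definition col τ h := if h <? root_ht τ then branch_col τ + (h - branch_ht τ) else h * slope_num τ / slope_den τ.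
Definition on_path τ h := (τ = [] /\ 0 <= h) \/ (τ <> [] /\ branch_ht τ < h).

Lemma removelast_snoc {X} (σ : list X) b : removelast (σ ++ [b]) = σ.
Proof. apply removelast_last. Qed.

Lemma branch_ht_snoc σ b :
  branch_ht (σ ++ [b]) = (root_ht σ + 1) * slope_den σ * (slope_den (σ ++ [b]) - slope_num (σ ++ [b])).
Proof. unfold branch_ht. rewrite removelast_snoc. reflexivity. Qed.
Lemma branch_col_snoc σ b :
  branch_col (σ ++ [b]) = (root_ht σ + 1) * (slope_den (σ ++ [b]) - slope_num (σ ++ [b])) * slope_num σ.
Proof. unfold branch_col. rewrite removelast_snoc. reflexivity. Qed.

Section Child.
Variables (σ : list nat) (b : nat).
Let τ := σ ++ [b].

Lemma layout_child :
  let Y := root_ht σ + 1 in let K := 2 ^ (Z.of_nat b + 1) in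
  slope_den τ = slope_den σ * K /\ slope_num τ = slope_num σ * K + 1 /\
  branch_ht τ = Y * slope_den σ * (slope_den τ - slope_num τ) /\ root_ht τ = Y * (slope_den σ - slope_num σ) * slope_den τ /\
  branch_col τ = Y * (slope_den τ - slope_num τ) * slope_num σ.
Proof.
  intros Y K. unfold τ. rewrite slope_den_snoc, slope_num_snoc, branch_ht_snoc, root_ht_snoc, branch_col_snoc, slope_den_snoc, slope_num_snoc. tauto.
Qed.

Lemma connector_length : root_ht τ - branch_ht τ = (root_ht σ + 1) * slope_den σ.
Proof. destruct layout_child as (H1 & H2 & H3 & H4 & H5). rewrite H3, H4, H1, H2. ring. Qed.

Lemma root_ht_lt_branch_ht : root_ht σ < branch_ht τ.
Proof.
  destruct layout_child as (H1 & H2 & H3 & H4 & H5). pose proof (pow2_succ_ge2 b).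
  pose proof (slope_den_ge σ). pose proof (slope_num_ge0 σ). pose proof (root_ht_ge0 σ).
  rewrite H3, H1, H2. set (K := 2 ^ (Z.of_nat b + 1)) in *.
  assert (7 * K <= (slope_den σ - slope_num σ) * K) by nia.
  assert (1 <= slope_den σ * K - (slope_num σ * K + 1)) by nia.
  assert ((root_ht σ + 1) * slope_den σ * 1 <= (root_ht σ + 1) * slope_den σ * (slope_den σ * K - (slope_num σ * K + 1))).
  { apply Z.mul_le_mono_nonneg_l; nia. }
  nia.
Qed.

Lemma branch_ht_ge : 3 * slope_den τ <= branch_ht τ.
Proof.
  destruct layout_child as (H1 & H2 & H3 & H4 & H5). pose proof (pow2_succ_ge2 b).
  pose proof (slope_den_ge σ). pose proof (slope_num_ge0 σ). pose proof (root_ht_ge0 σ).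
  rewrite H3, H1, H2. set (K := 2 ^ (Z.of_nat b + 1)) in *.
  assert (7 * K <= (slope_den σ - slope_num σ) * K) by nia.
  assert (4 * (slope_den σ * K) <= 8 * (slope_den σ * K - (slope_num σ * K + 1))) by nia.
  assert (1 * 8 * (slope_den σ * K - (slope_num σ * K + 1)) <= (root_ht σ + 1) * slope_den σ * (slope_den σ * K - (slope_num σ * K + 1))).
  { apply Z.mul_le_mono_nonneg_r; nia. }
  nia.
Qed.

Lemma branch_ht_lt_root_ht : branch_ht τ + 8 <= root_ht τ.
Proof. pose proof connector_length. pose proof (slope_den_ge σ). pose proof (slope_num_ge0 σ). pose proof (root_ht_ge0 σ). nia. Qed.

Lemma branch_ht_mult : branch_ht τ = slope_den σ * ((root_ht σ + 1) * (slope_den τ - slope_num τ)).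
Proof. destruct layout_child as (H1 & H2 & H3 & H4 & H5). rewrite H3. ring. Qed.

Lemma root_ht_mult : root_ht τ = slope_den τ * ((root_ht σ + 1) * (slope_den σ - slope_num σ)).
Proof. destruct layout_child as (H1 & H2 & H3 & H4 & H5). rewrite H4. ring. Qed.

Lemma slope_num_gap : slope_num τ * slope_den σ - slope_num σ * slope_den τ = slope_den σ.
Proof. destruct layout_child as (H1 & H2 & H3 & H4 & H5). rewrite H1, H2. ring. Qed.

Lemma col_ray_at_root : root_ht τ * slope_num τ / slope_den τ = branch_col τ + (root_ht τ - branch_ht τ).
Proof.
  rewrite connector_length. rewrite root_ht_mult. rewrite (Z.mul_comm (slope_den τ)), <- Z.mul_assoc, (Z.mul_comm (slope_den τ)), Z.mul_assoc.
  rewrite Z.div_mul by (pose proof (slope_den_ge τ); pose proof (slope_num_ge0 τ); lia).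
  destruct layout_child as (H1 & H2 & H3 & H4 & H5). rewrite H5, H1, H2. ring.
Qed.

Lemma col_ray_at_branch : branch_ht τ * slope_num σ / slope_den σ = branch_col τ.
Proof.
  rewrite branch_ht_mult. rewrite (Z.mul_comm (slope_den σ)), <- Z.mul_assoc, (Z.mul_comm (slope_den σ)), Z.mul_assoc.
  rewrite Z.div_mul by (pose proof (slope_den_ge σ); pose proof (slope_num_ge0 σ); lia).
  destruct layout_child as (H1 & H2 & H3 & H4 & H5). rewrite H5. ring.
Qed.
End Child.


Lemma slope_den_pos σ : 0 < slope_den σ. Proof. pose proof (slope_den_ge σ); pose proof (slope_num_ge0 σ); lia. Qed.

Lemma slope_desc_bounds σ ρ : slope_num σ * slope_den (σ ++ ρ) <= slope_num (σ ++ ρ) * slope_den σ /\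
                slope_num (σ ++ ρ) * slope_den σ <= (slope_num σ + 1) * slope_den (σ ++ ρ) - slope_den σ.
Proof.
  induction ρ as [|m ρ IH] using rev_ind.
  - rewrite app_nil_r. lia.
  - rewrite app_assoc, slope_num_snoc, slope_den_snoc. pose proof (pow2_succ_ge2 m).
    set (K := 2 ^ (Z.of_nat m + 1)) in *. set (τ := σ ++ ρ) in *.
    pose proof (slope_den_pos σ). pose proof (slope_den_pos τ). pose proof (slope_num_ge0 σ). destruct IH as [I1 I2].
    split; nia.
Qed.

Lemma pow2_succ_lt b1 b2 : (b1 < b2)%nat -> 2 * 2 ^ (Z.of_nat b1 + 1) <= 2 ^ (Z.of_nat b2 + 1).
Proof.
  intros H. rewrite <- Z.pow_succ_r by lia. apply Z.pow_le_mono_r; lia.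
Qed.

Lemma slope_sibling_gap π b1 b2 : (b1 < b2)%nat ->
  (slope_num (π ++ [b2]) + 1) * slope_den (π ++ [b1]) <= slope_num (π ++ [b1]) * slope_den (π ++ [b2]).
Proof.
  intros H. rewrite !slope_num_snoc, !slope_den_snoc. pose proof (pow2_succ_lt _ _ H). pose proof (pow2_succ_ge2 b1).
  pose proof (slope_den_pos π). pose proof (slope_num_ge0 π).
  set (K1 := 2 ^ (Z.of_nat b1 + 1)) in *. set (K2 := 2 ^ (Z.of_nat b2 + 1)) in *. nia.
Qed.

Lemma sibling_root_lt_branch π b1 b2 : (b1 < b2)%nat -> root_ht (π ++ [b1]) < branch_ht (π ++ [b2]).
Proof.
  intros H. rewrite branch_ht_snoc, root_ht_snoc, !slope_den_snoc, slope_num_snoc. pose proof (pow2_succ_lt _ _ H). pose proof (pow2_succ_ge2 b1).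
  pose proof (slope_den_pos π). pose proof (slope_num_ge0 π). pose proof (slope_den_ge π). pose proof (root_ht_ge0 π).
  set (K1 := 2 ^ (Z.of_nat b1 + 1)) in *. set (K2 := 2 ^ (Z.of_nat b2 + 1)) in *.
  set (Y := root_ht π + 1). assert (0 < Y) by (unfold Y; lia).
  assert (X : (slope_den π - slope_num π) * K1 < slope_den π * K2 - (slope_num π * K2 + 1)) by nia.
  assert (EQ: Y * (slope_den π - slope_num π) * (slope_den π * K1) = Y * slope_den π * ((slope_den π - slope_num π) * K1)) by ring.
  rewrite EQ. apply Z.mul_lt_mono_pos_l; nia.
Qed.

Lemma root_ht_app_le τ ρ : root_ht τ <= root_ht (τ ++ ρ).
Proof.
  induction ρ as [|m ρ IH] using rev_ind; [rewrite app_nil_r; lia|].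
  rewrite app_assoc. pose proof (branch_ht_lt_root_ht (τ ++ ρ) m). pose proof (root_ht_lt_branch_ht (τ ++ ρ) m). lia.
Qed.

Lemma root_ht_lt_desc_branch τ ρ : ρ <> [] -> root_ht τ < branch_ht (τ ++ ρ).
Proof.
  destruct ρ as [|m ρ] using rev_ind; [congruence|]. intros _.
  rewrite app_assoc. pose proof (root_ht_lt_branch_ht (τ ++ ρ) m). pose proof (root_ht_app_le τ ρ). lia.
Qed.

Lemma branch_ht_first_le σ b ρ : branch_ht (σ ++ [b]) <= branch_ht (σ ++ b :: ρ).
Proof.
  destruct ρ as [|m ρ]; [lia|].
  replace (σ ++ b :: m :: ρ) with ((σ ++ [b]) ++ m :: ρ) by (rewrite <- app_assoc; reflexivity).
  pose proof (root_ht_lt_desc_branch (σ ++ [b]) (m :: ρ) ltac:(congruence)). pose proof (branch_ht_lt_root_ht σ b). lia.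
Qed.

Lemma branch_ht_ge' τ : τ <> [] -> 3 * slope_den τ <= branch_ht τ.
Proof. destruct τ as [|m τ] using rev_ind; [congruence|]. intros; apply branch_ht_ge. Qed.
Lemma branch_ht_lt_root_ht' τ : τ <> [] -> branch_ht τ + 8 <= root_ht τ.
Proof. destruct τ as [|m τ] using rev_ind; [congruence|]. intros; apply branch_ht_lt_root_ht. Qed.

Lemma col_ray τ h : root_ht τ <= h -> col τ h = h * slope_num τ / slope_den τ.
Proof. intros H. unfold col. destruct (Z.ltb_spec h (root_ht τ)); lia. Qed.
Lemma col_connector τ h : h < root_ht τ -> col τ h = branch_col τ + (h - branch_ht τ).
Proof. intros H. unfold col. destruct (Z.ltb_spec h (root_ht τ)); lia. Qed.

Lemma on_path_nonneg τ h : on_path τ h -> 0 <= h.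
Proof.
  intros [[_ H]|[Hn H]]; [lia|]. pose proof (branch_ht_ge' τ Hn). pose proof (slope_den_pos τ). lia.
Qed.

Lemma col_nonneg τ h : on_path τ h -> 0 <= col τ h.
Proof.
  intros Hg. pose proof (on_path_nonneg _ _ Hg). destruct (Z.ltb_spec h (root_ht τ)).
  - rewrite col_connector by lia. destruct Hg as [[-> _]|[Hn Hh]]; [rewrite root_ht_nil in *; lia|].
    destruct τ as [|m τ] using rev_ind; [congruence|]. rewrite branch_col_snoc.
    pose proof (root_ht_ge0 τ). pose proof (slope_num_ge0 τ). pose proof (slope_den_ge (τ ++ [m])). pose proof (slope_num_ge0 (τ++[m])).
    assert (0 <= (root_ht τ + 1) * (slope_den (τ ++ [m]) - slope_num (τ ++ [m])) * slope_num τ) by (apply Z.mul_nonneg_nonneg; nia).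
    lia.
  - rewrite col_ray by lia. apply Z.div_pos; [|apply slope_den_pos]. pose proof (slope_num_ge0 τ); nia.
Qed.

Lemma col_upper τ h : on_path τ h -> slope_den τ * col τ h <= h * slope_num τ.
Proof.
  intros Hg. pose proof (on_path_nonneg _ _ Hg). destruct (Z.ltb_spec h (root_ht τ)).
  - destruct Hg as [[-> _]|[Hn Hh]]; [rewrite root_ht_nil in *; lia|].
    destruct τ as [|m σ] using rev_ind; [congruence|]. rewrite col_connector by lia.
    pose proof (col_ray_at_root σ m) as R. pose proof (root_ht_mult σ m) as SM.
    set (τ := σ ++ [m]) in *.
    set (M := (root_ht σ + 1) * (slope_den σ - slope_num σ)) in *.
    assert (E1 : root_ht τ * slope_num τ / slope_den τ = M * slope_num τ).
    { rewrite SM. rewrite (Z.mul_comm (slope_den τ)), <- Z.mul_assoc, (Z.mul_comm (slope_den τ)), Z.mul_assoc.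
      apply Z.div_mul. pose proof (slope_den_pos τ); lia. }
    rewrite E1 in R. pose proof (slope_den_ge τ). pose proof (slope_num_ge0 τ).
    assert (slope_den τ * (branch_col τ + (root_ht τ - branch_ht τ)) = root_ht τ * slope_num τ) by (rewrite <- R, SM; ring).
    nia.
  - rewrite col_ray by lia. pose proof (slope_den_pos τ). apply Z.mul_div_le. lia.
Qed.

Lemma col_lower_ray τ h : root_ht τ <= h -> h * slope_num τ < slope_den τ * (col τ h + 1).
Proof.
  intros H. rewrite col_ray by lia. pose proof (slope_den_pos τ).
  pose proof (Z.mod_pos_bound (h * slope_num τ) (slope_den τ) H0). pose proof (Z.div_mod (h * slope_num τ) (slope_den τ)). lia.
Qed.

Lemma col_lower_connector σ b h : branch_ht (σ ++ [b]) < h -> h < root_ht (σ ++ [b]) ->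
  h * slope_num σ <= slope_den σ * col (σ ++ [b]) h.
Proof.
  intros H1 H2. rewrite col_connector by lia. pose proof (col_ray_at_branch σ b) as BU. pose proof (branch_ht_mult σ b) as HM.
  set (τ := σ ++ [b]) in *. set (X := (root_ht σ + 1) * (slope_den τ - slope_num τ)) in *.
  assert (E1 : branch_ht τ * slope_num σ / slope_den σ = X * slope_num σ).
  { rewrite HM. rewrite (Z.mul_comm (slope_den σ)), <- Z.mul_assoc, (Z.mul_comm (slope_den σ)), Z.mul_assoc.
    apply Z.div_mul. pose proof (slope_den_pos σ); lia. }
  rewrite E1 in BU. pose proof (slope_den_ge σ). pose proof (slope_num_ge0 σ).
  assert (slope_den σ * branch_col τ = branch_ht τ * slope_num σ) by (rewrite <- BU, HM; ring). nia.
Qed.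

Lemma sep_arith Ua Ub h Aa Qa Ab Qb D :
  0 < Qa -> 0 < Qb -> 0 <= h -> h * Aa < Qa * (Ua + 1) -> Qb * Ub <= h * Ab ->
  Ab * Qa + D <= Aa * Qb -> 3 * Qa * Qb <= h * D -> Ub + 3 <= Ua.
Proof.
  intros HQa HQb Hh H1 H2 H3 H4.
  assert (X1 : Qb * (h * Aa) < Qb * (Qa * (Ua + 1))) by (apply Z.mul_lt_mono_pos_l; auto).
  assert (X2 : h * (Ab * Qa + D) <= h * (Aa * Qb)) by (apply Z.mul_le_mono_nonneg_l; auto).
  assert (X3 : Qa * (Qb * Ub) <= Qa * (h * Ab)) by (apply Z.mul_le_mono_nonneg_l; lia).
  assert (X4 : Qa * Qb * (Ub + 3) < Qa * Qb * (Ua + 1)) by nia.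
  assert (0 < Qa * Qb) by nia.
  apply Z.mul_lt_mono_pos_l in X4; auto. lia.
Qed.


Lemma addr_cases (τ1 τ2 : list nat) : τ1 <> τ2 ->
  (exists b ρ, τ2 = τ1 ++ b :: ρ) \/ (exists b ρ, τ1 = τ2 ++ b :: ρ) \/
  (exists π b1 b2 ρ1 ρ2, b1 <> b2 /\ τ1 = π ++ b1 :: ρ1 /\ τ2 = π ++ b2 :: ρ2).
Proof.
  revert τ2. induction τ1 as [|x r IH]; intros τ2 Hne.
  - destruct τ2 as [|y r']; [congruence|]. left. exists y, r'. reflexivity.
  - destruct τ2 as [|y r'].
    + right; left. exists x, r. reflexivity.
    + destruct (Nat.eq_dec x y) as [->|Hxy].
      * assert (r <> r') by congruence. destruct (IH r' H) as [[b [ρ E]]|[[b [ρ E]]|[π [b1 [b2 [ρ1 [ρ2 (H1&H2&H3)]]]]]]].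
        -- left. exists b, ρ. rewrite E. reflexivity.
        -- right; left. exists b, ρ. rewrite E. reflexivity.
        -- right; right. exists (y :: π), b1, b2, ρ1, ρ2. rewrite H2, H3. auto.
      * right; right. exists [], x, y, r, r'. auto.
Qed.

Lemma app_cons_snoc (σ : list nat) b ρ : σ ++ b :: ρ = (σ ++ [b]) ++ ρ.
Proof. rewrite <- app_assoc. reflexivity. Qed.

Lemma on_path_desc σ b ρ h : on_path (σ ++ b :: ρ) h -> branch_ht (σ ++ [b]) < h.
Proof.
  intros [[E _]|[_ H]]; [destruct σ; discriminate|]. pose proof (branch_ht_first_le σ b ρ). lia.
Qed.

Lemma col_lower_desc σ b ρ h : on_path (σ ++ b :: ρ) h -> (ρ <> [] \/ root_ht (σ ++ b :: ρ) <= h) ->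
  h * slope_num (σ ++ [b]) < slope_den (σ ++ [b]) * (col (σ ++ b :: ρ) h + 1).
Proof.
  intros Hg Hc. set (τ0 := σ ++ [b]). pose proof (on_path_nonneg _ _ Hg) as Hh.
  assert (Et : σ ++ b :: ρ = τ0 ++ ρ) by apply app_cons_snoc. rewrite Et in *.
  destruct (Z.le_gt_cases (root_ht (τ0 ++ ρ)) h) as [Hr|Hc2].
  - pose proof (col_lower_ray _ _ Hr). destruct (slope_desc_bounds τ0 ρ) as [L _].
    pose proof (slope_den_pos (τ0 ++ ρ)). pose proof (slope_den_pos τ0). pose proof (slope_num_ge0 τ0).
    set (τ := τ0 ++ ρ) in *.
    assert (X0 : slope_den τ0 * (h * slope_num τ) < slope_den τ0 * (slope_den τ * (col τ h + 1))) by (apply Z.mul_lt_mono_pos_l; lia).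
    assert (X : slope_den τ * (h * slope_num τ0) < slope_den τ * (slope_den τ0 * (col τ h + 1))) by nia.
    apply Z.mul_lt_mono_pos_l in X; lia.
  - destruct Hc as [Hn|Hc]; [|lia].
    destruct ρ as [|m ρ'] using rev_ind; [congruence|]. clear IHρ'.
    rewrite app_assoc in *. set (par := τ0 ++ ρ') in *.
    destruct Hg as [[E _]|[_ Hg]]; [destruct par; discriminate|].
    pose proof (col_lower_connector par m h Hg Hc2). destruct (slope_desc_bounds τ0 ρ') as [L _].
    fold par in L. pose proof (slope_den_pos par). pose proof (slope_den_pos τ0). pose proof (slope_num_ge0 τ0).
    set (τ := par ++ [m]) in *.
    assert (X : slope_den par * (h * slope_num τ0) <= slope_den par * (slope_den τ0 * col τ h)).
    { apply Z.le_trans with (slope_den τ0 * (h * slope_num par)); [nia|]. nia. }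
    apply Z.mul_le_mono_pos_l in X; lia.
Qed.

Lemma col_sep_sibling π b1 b2 ρ1 ρ2 h : (b1 < b2)%nat -> on_path (π ++ b1 :: ρ1) h -> on_path (π ++ b2 :: ρ2) h ->
  col (π ++ b2 :: ρ2) h + 3 <= col (π ++ b1 :: ρ1) h.
Proof.
  intros Hb Hg1 Hg2.
  pose proof (on_path_desc _ _ _ _ Hg2) as Hh2. pose proof (sibling_root_lt_branch π b1 b2 Hb) as Hs.
  assert (Hc : ρ1 <> [] \/ root_ht (π ++ b1 :: ρ1) <= h).
  { destruct ρ1; [right; lia| left; congruence]. }
  pose proof (col_lower_desc _ _ _ _ Hg1 Hc) as L1.
  pose proof (col_upper _ _ Hg2) as U2.
  set (τ2 := π ++ b2 :: ρ2) in *.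
  assert (Gap : slope_num τ2 * slope_den (π ++ [b1]) + slope_den (π ++ [b1]) <= slope_num (π ++ [b1]) * slope_den τ2).
  { pose proof (slope_desc_bounds (π ++ [b2]) ρ2) as [_ Up]. rewrite <- app_cons_snoc in Up. fold τ2 in Up.
    pose proof (slope_sibling_gap π b1 b2 Hb) as S3.
    pose proof (slope_den_pos (π ++ [b1])). pose proof (slope_den_pos (π ++ [b2])). pose proof (slope_den_pos τ2).
    set (Q1 := slope_den (π ++ [b1])) in *. set (Q2' := slope_den (π ++ [b2])) in *.
    assert (X : Q2' * (slope_num τ2 * Q1 + Q1) <= Q2' * (slope_num (π ++ [b1]) * slope_den τ2)) by nia.
    apply Z.mul_le_mono_pos_l in X; lia. }
  assert (H3 : 3 * slope_den τ2 <= h).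
  { assert (τ2 <> []) by (unfold τ2; destruct π; discriminate).
    pose proof (branch_ht_ge' τ2 H). destruct Hg2 as [[E _]|[_ Hg2]]; [congruence|lia]. }
  pose proof (slope_den_pos (π ++ [b1])). pose proof (slope_den_pos τ2).
  apply (sep_arith (col (π ++ b1 :: ρ1) h) (col τ2 h) h (slope_num (π ++ [b1])) (slope_den (π ++ [b1])) (slope_num τ2) (slope_den τ2) (slope_den (π ++ [b1]))); auto.
  - apply on_path_nonneg with τ2; auto.
  - assert (slope_den (π ++ [b1]) * (3 * slope_den τ2) <= slope_den (π ++ [b1]) * h) by (apply Z.mul_le_mono_nonneg_l; lia).
    lia.
Qed.

Lemma col_sep_branch σ b h : branch_ht (σ ++ [b]) < h -> h < root_ht (σ ++ [b]) ->
  col σ h + 2 <= col (σ ++ [b]) h \/ (h = branch_ht (σ ++ [b]) + 1 /\ col (σ ++ [b]) h = col σ h + 1).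
Proof.
  intros H1 H2. pose proof (root_ht_lt_branch_ht σ b). rewrite col_ray by lia. rewrite col_connector by lia.
  pose proof (col_ray_at_branch σ b) as BU. pose proof (branch_ht_mult σ b) as HM.
  set (τ := σ ++ [b]) in *. set (X := (root_ht σ + 1) * (slope_den τ - slope_num τ)) in *.
  assert (E1 : branch_ht τ * slope_num σ / slope_den σ = X * slope_num σ).
  { rewrite HM. rewrite (Z.mul_comm (slope_den σ)), <- Z.mul_assoc, (Z.mul_comm (slope_den σ)), Z.mul_assoc.
    apply Z.div_mul. pose proof (slope_den_pos σ); lia. }
  rewrite E1 in BU. rewrite <- BU.
  set (t := h - branch_ht τ).
  assert (Eh : h * slope_num σ = (t * slope_num σ) + (X * slope_num σ) * slope_den σ) by (unfold t; rewrite HM; ring).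
  rewrite Eh. rewrite Z.div_add by (pose proof (slope_den_pos σ); lia).
  pose proof (slope_den_ge σ). pose proof (slope_num_ge0 σ). pose proof (slope_den_pos σ).
  assert (0 <= t * slope_num σ / slope_den σ) by (apply Z.div_pos; nia).
  assert (Hq : slope_den σ * (t * slope_num σ / slope_den σ) <= t * slope_num σ) by (apply Z.mul_div_le; lia).
  assert (8 * (t * slope_num σ / slope_den σ) < t) by nia.
  destruct (Z.eq_dec t 1) as [Ht|Ht].
  - right. split; [unfold t in Ht; lia|]. lia.
  - left. lia.
Qed.

Lemma col_sep_desc τ1 b ρ h : on_path τ1 h -> on_path (τ1 ++ b :: ρ) h ->
  col τ1 h + 2 <= col (τ1 ++ b :: ρ) h \/
  (ρ = [] /\ h = branch_ht (τ1 ++ [b]) + 1 /\ col (τ1 ++ [b]) h = col τ1 h + 1).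
Proof.
  intros Hg1 Hg2. pose proof (on_path_desc _ _ _ _ Hg2) as Hh2. pose proof (root_ht_lt_branch_ht τ1 b) as HS.
  pose proof (col_upper _ _ Hg1) as U1. pose proof (on_path_nonneg _ _ Hg1) as Hh.
  pose proof (slope_num_gap τ1 b) as SG.
  destruct ρ as [|m ρ'].
  - destruct (Z.le_gt_cases (root_ht (τ1 ++ [b])) h) as [Hr|Hc].
    + left. pose proof (col_lower_ray _ _ Hr). pose proof (slope_den_pos τ1). pose proof (slope_den_pos (τ1 ++ [b])).
      pose proof (branch_ht_lt_root_ht' (τ1 ++ [b]) ltac:(destruct τ1; discriminate)).
      pose proof (branch_ht_ge τ1 b).
      assert (col τ1 h + 3 <= col (τ1 ++ [b]) h); [|lia].
      apply (sep_arith (col (τ1 ++ [b]) h) (col τ1 h) h (slope_num (τ1 ++ [b])) (slope_den (τ1 ++ [b])) (slope_num τ1) (slope_den τ1) (slope_den τ1)); auto; try lia.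
      assert (slope_den τ1 * (3 * slope_den (τ1 ++ [b])) <= slope_den τ1 * h) by (apply Z.mul_le_mono_nonneg_l; lia). lia.
    + destruct (col_sep_branch τ1 b h Hh2 Hc) as [X|X]; [left; auto| right; tauto].
  - left.
    assert (Hnn : m :: ρ' <> []) by congruence.
    pose proof (col_lower_desc τ1 b (m :: ρ') h Hg2 (or_introl Hnn)) as L.
    assert (Hh3 : branch_ht (τ1 ++ b :: m :: ρ') < h).
    { destruct Hg2 as [[E _]|[_ Hg2]]; [destruct τ1; discriminate|exact Hg2]. }
    pose proof (root_ht_lt_desc_branch (τ1 ++ [b]) (m :: ρ') Hnn) as D.
    rewrite <- app_cons_snoc in D.
    pose proof (branch_ht_ge τ1 b). pose proof (branch_ht_lt_root_ht τ1 b).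
    pose proof (slope_den_pos τ1). pose proof (slope_den_pos (τ1 ++ [b])).
    assert (col τ1 h + 3 <= col (τ1 ++ b :: m :: ρ') h); [|lia].
    apply (sep_arith (col (τ1 ++ b :: m :: ρ') h) (col τ1 h) h (slope_num (τ1 ++ [b])) (slope_den (τ1 ++ [b])) (slope_num τ1) (slope_den τ1) (slope_den τ1)); auto; try lia.
    assert (slope_den τ1 * (3 * slope_den (τ1 ++ [b])) <= slope_den τ1 * h) by (apply Z.mul_le_mono_nonneg_l; lia). lia.
Qed.

Lemma col_sep τ1 τ2 h : on_path τ1 h -> on_path τ2 h -> τ1 <> τ2 ->
  col τ1 h + 2 <= col τ2 h \/ col τ2 h + 2 <= col τ1 h \/
  (exists b, τ2 = τ1 ++ [b] /\ h = branch_ht τ2 + 1 /\ col τ2 h = col τ1 h + 1) \/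
  (exists b, τ1 = τ2 ++ [b] /\ h = branch_ht τ1 + 1 /\ col τ1 h = col τ2 h + 1).
Proof.
  intros Hg1 Hg2 Hne.
  destruct (addr_cases τ1 τ2 Hne) as [[b [ρ E]]|[[b [ρ E]]|[π [b1 [b2 [ρ1 [ρ2 (H1&H2&H3)]]]]]]].
  - subst τ2. destruct (col_sep_desc τ1 b ρ h Hg1 Hg2) as [X|(-> & X1 & X2)]; [left; auto|].
    right; right; left. exists b. auto.
  - subst τ1. destruct (col_sep_desc τ2 b ρ h Hg2 Hg1) as [X|(-> & X1 & X2)]; [right; left; auto|].
    right; right; right. exists b. auto.
  - subst. destruct (Nat.lt_total b1 b2) as [Hl|[Hl|Hl]]; [|lia|].
    + right; left. pose proof (col_sep_sibling π b1 b2 ρ1 ρ2 h Hl Hg1 Hg2). lia.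
    + left. pose proof (col_sep_sibling π b2 b1 ρ2 ρ1 h Hl Hg2 Hg1). lia.
Qed.

Lemma div_small_offset (m t a q : Z) : 0 < q -> 0 <= a -> 0 <= t -> t * a < q ->
  (q * m + t) * a / q = m * a.
Proof.
  intros Hq Ha Ht Hta.
  replace ((q * m + t) * a) with (t * a + (m * a) * q) by ring.
  rewrite Z.div_add by lia. rewrite Z.div_small by nia. ring.
Qed.

Lemma root_ht_multiple τ : exists m, root_ht τ = slope_den τ * m /\ 0 <= m.
Proof.
  destruct τ as [|b σ] using rev_ind; [exists 0; rewrite root_ht_nil; lia|].
  exists ((root_ht σ + 1) * (slope_den σ - slope_num σ)). split; [apply root_ht_mult|].
  pose proof (root_ht_ge0 σ). pose proof (slope_den_ge σ). pose proof (slope_num_ge0 σ). nia.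
Qed.

Lemma col_root_next τ : col τ (root_ht τ + 1) = col τ (root_ht τ).
Proof.
  rewrite !col_ray by lia. destruct (root_ht_multiple τ) as [m [Hm Hm0]]. rewrite Hm.
  pose proof (slope_den_ge τ). pose proof (slope_num_ge0 τ).
  rewrite div_small_offset by nia. rewrite <- (Z.add_0_r (slope_den τ * m)). rewrite div_small_offset by nia. reflexivity.
Qed.

Lemma col_branch_next σ b t : 0 <= t <= 7 -> col σ (branch_ht (σ ++ [b]) + t) = branch_col (σ ++ [b]).
Proof.
  intros Ht. pose proof (root_ht_lt_branch_ht σ b). rewrite col_ray by lia. rewrite branch_ht_mult.
  pose proof (slope_den_ge σ). pose proof (slope_num_ge0 σ). rewrite div_small_offset by nia.
  rewrite <- (col_ray_at_branch σ b). rewrite branch_ht_mult.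
  set (X := (root_ht σ + 1) * (slope_den (σ ++ [b]) - slope_num (σ ++ [b]))).
  replace (slope_den σ * X * slope_num σ) with ((X * slope_num σ) * slope_den σ) by ring.
  rewrite Z.div_mul by lia. reflexivity.
Qed.

Lemma col_child_first σ b : col (σ ++ [b]) (branch_ht (σ ++ [b]) + 1) = branch_col (σ ++ [b]) + 1.
Proof. pose proof (branch_ht_lt_root_ht σ b). rewrite col_connector by lia. ring. Qed.

Lemma col_step τ h : on_path τ h -> col τ (h + 1) = col τ h \/ col τ (h + 1) = col τ h + 1.
Proof.
  intros Hg. pose proof (on_path_nonneg _ _ Hg) as Hh.
  destruct (Z.lt_ge_cases (h + 1) (root_ht τ)) as [H1|H1].
  - right. rewrite !col_connector by lia. ring.
  - destruct (Z.eq_dec (h + 1) (root_ht τ)) as [H2|H2].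
    + right. destruct τ as [|b σ] using rev_ind; [rewrite root_ht_nil in H2; lia|].
      rewrite (col_connector _ h) by lia. rewrite H2. rewrite (col_ray _ (root_ht _)) by lia. rewrite col_ray_at_root. lia.
    + rewrite !col_ray by lia. pose proof (slope_den_pos τ). pose proof (slope_den_ge τ). pose proof (slope_num_ge0 τ).
      set (q := slope_den τ) in *. set (a := slope_num τ) in *.
      pose proof (Z.div_mod (h * a) q ltac:(lia)). pose proof (Z.mod_pos_bound (h * a) q ltac:(lia)).
      pose proof (Z.div_mod ((h + 1) * a) q ltac:(lia)). pose proof (Z.mod_pos_bound ((h + 1) * a) q ltac:(lia)).
      assert (h * a / q <= (h + 1) * a / q) by (apply Z.div_le_mono; nia).
      assert ((h + 1) * a / q <= h * a / q + 1); [|lia].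
      assert (q * ((h + 1) * a / q) < q * (h * a / q + 2)) by nia. nia.
Qed.

Lemma col_child_next σ b : col (σ ++ [b]) (branch_ht (σ ++ [b]) + 2) = col (σ ++ [b]) (branch_ht (σ ++ [b]) + 1) + 1.
Proof. pose proof (branch_ht_lt_root_ht σ b). rewrite !col_connector by lia. ring. Qed.

(** * Fuel *)

Definition dec (P : Prop) : {P} + {~ P} := excluded_middle_informative P.

Definition bking := mkPiece Black King.

Definition bpawn := mkPiece Black Pawn.

Definition rpawn := mkPiece Red Pawn.

(* The dark squares of the fuel region [x + y <= -8] after [k] fuel jumps.  The
   black pawns (-12 - 2j, 2j), [j >= k], are blocked by red pawns, and the red
   pawn at (-13 - 2k, 2k + 1) can jump SE over the pawn [k] into the hole
   (-11 - 2k, 2k - 1), from where it cannot jump again. *)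
Definition fuel_sq (k x y : Z) : option piece :=
  if dec (exists j, k <= j /\ x = -12 - 2 * j /\ y = 2 * j) then Some bpawn
  else if dec ((exists j, 0 <= j < k /\ x = -12 - 2 * j /\ y = 2 * j) \/ (x = -11 - 2 * k /\ y = 2 * k - 1))
       then None else Some rpawn.

Lemma dir_cases d : (dx d = 1 /\ dy d = 1) \/ (dx d = -1 /\ dy d = 1) \/ (dx d = 1 /\ dy d = -1) \/ (dx d = -1 /\ dy d = -1).
Proof. destruct d; simpl; tauto. Qed.

Lemma fuel_sq_pawn k j : k <= j -> fuel_sq k (-12 - 2 * j) (2 * j) = Some bpawn.
Proof.
  intros H. unfold fuel_sq. destruct (dec _) as [_|n]; [reflexivity|]. exfalso; apply n. exists j; auto.
Qed.

Lemma fuel_sq_hole k j : 0 <= j < k -> fuel_sq k (-12 - 2 * j) (2 * j) = None.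
Proof.
  intros H. unfold fuel_sq. destruct (dec _) as [[j' (H1 & H2 & H3)]|n]; [lia|].
  destruct (dec _) as [_|n']; [reflexivity|]. exfalso; apply n'. left. exists j; auto.
Qed.

Lemma fuel_sq_landing k : fuel_sq k (-11 - 2 * k) (2 * k - 1) = None.
Proof.
  unfold fuel_sq. destruct (dec _) as [[j' (H1 & H2 & H3)]|n]; [lia|].
  destruct (dec _) as [_|n']; [reflexivity|]. exfalso; apply n'. right. auto.
Qed.

Lemma fuel_sq_red k x y : (forall j, ~ (x = -12 - 2 * j /\ y = 2 * j)) -> ~ (x = -11 - 2 * k /\ y = 2 * k - 1) ->
  fuel_sq k x y = Some rpawn.
Proof.
  intros H1 H2. unfold fuel_sq. destruct (dec _) as [[j' (_ & E1 & E2)]|n]; [exfalso; apply (H1 j'); auto|].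
  destruct (dec _) as [[[j' (_ & E1 & E2)]|E]|_]; [exfalso; apply (H1 j'); auto|contradiction|reflexivity].
Qed.

Lemma fuel_sq_black k x y e : fuel_sq k x y = Some e -> pcol e = Black ->
  exists j, k <= j /\ x = -12 - 2 * j /\ y = 2 * j.
Proof.
  unfold fuel_sq. destruct (dec _) as [H|n]; [auto|].
  destruct (dec _); [discriminate|]. intros E; inversion E; subst. simpl. discriminate.
Qed.

Definition fuel_zone (b : board) (k : Z) := forall x y, Z.odd (x + y) = false -> x + y <= -8 -> b x y = fuel_sq k x y.

Definition black_in_fuel (b : board) :=
  forall x y e, b x y = Some e -> pcol e = Black -> Z.odd (x + y) = false /\ x + y <= -8.

Lemma fuel_sq_near k j : k <= j ->
  fuel_sq k (-12 - 2 * j + 1) (2 * j + 1) = Some rpawn /\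
  fuel_sq k (-12 - 2 * j - 1) (2 * j + 1) = Some rpawn /\
  fuel_sq k (-12 - 2 * j + 2) (2 * j + 2) = Some rpawn /\
  fuel_sq k (-12 - 2 * j - 2) (2 * j + 2) = Some bpawn.
Proof.
  intros H. split; [|split; [|split]].
  - apply fuel_sq_red; [intros j' [E1 E2]; lia| intros [E1 E2]; lia].
  - apply fuel_sq_red; [intros j' [E1 E2]; lia| intros [E1 E2]; lia].
  - apply fuel_sq_red; [intros j' [E1 E2]; lia| intros [E1 E2]; lia].
  - replace (-12 - 2 * j - 2) with (-12 - 2 * (j + 1)) by ring. replace (2 * j + 2) with (2 * (j + 1)) by ring.
    apply fuel_sq_pawn. lia.
Qed.

Lemma odd_false_of_mod e : e mod 2 = 0 -> Z.odd e = false.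
Proof. intros H. pose proof (Zmod_odd e). destruct (Z.odd e); [lia|auto]. Qed.

Ltac prove_even := apply odd_false_of_mod; Z.div_mod_to_equations; lia.

Lemma won_of_fuel b k : 0 <= k -> fuel_zone b k -> black_in_fuel b -> won_for_red (mkPos b Black).
Proof.
  intros Hk Hz Hb. split; [reflexivity|]. intros [q Hq].
  assert (Stuck : forall x y pc, b x y = Some pc -> pcol pc = Black ->
    pc = bpawn /\ exists j, k <= j /\ x = -12 - 2 * j /\ y = 2 * j).
  { intros x y pc H1 H2. pose proof (Hb x y pc H1 H2) as [Z0 Z1]. rewrite Hz in H1 by auto.
    destruct (fuel_sq_black k x y pc H1 H2) as [j Hj]. split; [|eauto].
    unfold fuel_sq in H1. destruct (dec _) as [_|n]; [inversion H1; auto|]. exfalso. apply n. eauto. }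
  assert (NoJ : forall x y pc d, b x y = Some pc -> pcol pc = Black -> ~ jump_ok pc (b, x, y) d).
  { intros x y pc d H1 H2 J. destruct (Stuck x y pc H1 H2) as [-> [j (Hj & -> & ->)]].
    destruct J as (Hp & _ & HL). unfold permitted, bpawn in Hp; cbn [pkind pcol] in Hp. pose proof (fuel_sq_near k j Hj) as (N1 & N2 & N3 & N4).
    destruct (dir_cases d) as [[E1 E2]|[[E1 E2]|[[E1 E2]|[E1 E2]]]]; try (exfalso; rewrite E2 in Hp; lia).
    - rewrite E1, E2 in HL. rewrite Hz in HL by first [prove_even|lia].
      replace (-12 - 2 * j + 2 * 1) with (-12 - 2 * j + 2) in HL by ring.
      replace (2 * j + 2 * 1) with (2 * j + 2) in HL by ring. congruence.
    - rewrite E1, E2 in HL. rewrite Hz in HL by first [prove_even|lia].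
      replace (-12 - 2 * j + 2 * -1) with (-12 - 2 * j - 2) in HL by ring.
      replace (2 * j + 2 * 1) with (2 * j + 2) in HL by ring. congruence.
  }
  destruct Hq as [[Hf|Hi]|[_ Hs]].
  - destruct Hf as (x & y & pc & ds & H1 & H2 & Hn & J & _). simpl in H2.
    destruct ds as [|d ds]; [congruence|]. destruct J as [J _]. eapply NoJ; eauto.
  - destruct Hi as (x & y & pc & s & H1 & H2 & J & _). simpl in H2. eapply (NoJ x y pc (s 0%nat)); eauto.
    apply (J 0%nat).
  - destruct Hs as (x & y & pc & d & H1 & H2 & Hp & HN & _). simpl in H2.
    destruct (Stuck x y pc H1 H2) as [-> [j (Hj & -> & ->)]]. unfold permitted, bpawn in Hp; cbn [pkind pcol] in Hp.
    pose proof (fuel_sq_near k j Hj) as (N1 & N2 & N3 & N4).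
    destruct (dir_cases d) as [[E1 E2]|[[E1 E2]|[[E1 E2]|[E1 E2]]]]; try (exfalso; rewrite E2 in Hp; lia).
    + rewrite E1, E2 in HN. rewrite Hz in HN by first [prove_even|lia]. congruence.
    + rewrite E1, E2 in HN. rewrite Hz in HN by first [prove_even|lia].
      replace (-12 - 2 * j + -1) with (-12 - 2 * j - 1) in HN by ring. congruence.
Qed.

Definition fuel_step (b : board) (k : Z) : board := fst (fst (jump_step rpawn (b, -13 - 2 * k, 2 * k + 1) SE)).

Lemma fuel_step_eq b k x y : fuel_step b k x y =
  if (x =? -11 - 2 * k) && (y =? 2 * k - 1) then Some rpawn
  else if (x =? -12 - 2 * k) && (y =? 2 * k) then None
  else if (x =? -13 - 2 * k) && (y =? 2 * k + 1) then None
  else b x y.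
Proof.
  unfold fuel_step, jump_step, upd. cbn [fst dx dy].
  replace (-13 - 2 * k + 2 * 1) with (-11 - 2 * k) by ring.
  replace (2 * k + 1 + 2 * -1) with (2 * k - 1) by ring.
  replace (-13 - 2 * k + 1) with (-12 - 2 * k) by ring.
  replace (2 * k + 1 + -1) with (2 * k) by ring. reflexivity.
Qed.

Lemma fuel_sq_shift k x y : 0 <= k ->
  ~ (x = -11 - 2 * k /\ y = 2 * k - 1) -> ~ (x = -12 - 2 * k /\ y = 2 * k) -> ~ (x = -13 - 2 * k /\ y = 2 * k + 1) ->
  fuel_sq k x y = fuel_sq (k + 1) x y.
Proof.
  intros Hk N1 N2 N3. unfold fuel_sq.
  destruct (dec (exists j, k <= j /\ x = -12 - 2 * j /\ y = 2 * j)) as [[j (A1 & A2 & A3)]|NA];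
  destruct (dec (exists j, k + 1 <= j /\ x = -12 - 2 * j /\ y = 2 * j)) as [[j' (B1 & B2 & B3)]|B]; auto.
  - exfalso. destruct (Z.eq_dec j k); [subst; apply N2; auto|]. apply B. exists j. split; [lia|auto].
  - exfalso. apply NA. exists j'. split; [lia|auto].
  - destruct (dec ((exists j, 0 <= j < k /\ x = -12 - 2 * j /\ y = 2 * j) \/ (x = -11 - 2 * k /\ y = 2 * k - 1))) as [[[j (C1 & C2 & C3)]|C]|C];
    destruct (dec ((exists j, 0 <= j < k + 1 /\ x = -12 - 2 * j /\ y = 2 * j) \/ (x = -11 - 2 * (k + 1) /\ y = 2 * (k + 1) - 1))) as [[[j' (D1 & D2 & D3)]|D]|D]; auto.
    all: exfalso.
    all: try (apply N1; split; lia); try (apply N2; split; lia); try (apply N3; split; lia).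
    all: try (apply D; left; exists j; split; [lia|split; lia]).
    all: try (apply C; left; exists j'; split; [lia|split; lia]).
    all: try (apply C; right; split; lia).
    all: try (apply D; right; split; lia).
    all: try (destruct (Z.eq_dec j' k); [apply N2; subst; split; lia|apply C; left; exists j'; split; [lia|split;lia]]).
Qed.

Lemma fuel_step_zone b k : 0 <= k -> fuel_zone b k -> fuel_zone (fuel_step b k) (k + 1).
Proof.
  intros Hk Hz x y Hod Hxy. rewrite fuel_step_eq.
  destruct ((x =? -11 - 2 * k) && (y =? 2 * k - 1))%bool eqn:E1.
  { apply andb_true_iff in E1. destruct E1 as [E1 E2]. apply Z.eqb_eq in E1, E2. subst.
    symmetry. apply fuel_sq_red; [intros j [J1 J2]; lia|intros [J1 J2]; lia]. }
  destruct ((x =? -12 - 2 * k) && (y =? 2 * k))%bool eqn:E2.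
  { apply andb_true_iff in E2. destruct E2 as [E2 E3]. apply Z.eqb_eq in E2, E3. subst.
    symmetry. apply fuel_sq_hole. lia. }
  destruct ((x =? -13 - 2 * k) && (y =? 2 * k + 1))%bool eqn:E3.
  { apply andb_true_iff in E3. destruct E3 as [E3 E4]. apply Z.eqb_eq in E3, E4. subst.
    symmetry. replace (-13 - 2 * k) with (-11 - 2 * (k + 1)) by ring. replace (2 * k + 1) with (2 * (k + 1) - 1) by ring.
    apply fuel_sq_landing. }
  rewrite Hz by auto. apply fuel_sq_shift; auto.
  - intros [-> ->]. rewrite !Z.eqb_refl in E1. discriminate.
  - intros [-> ->]. rewrite !Z.eqb_refl in E2. discriminate.
  - intros [-> ->]. rewrite !Z.eqb_refl in E3. discriminate.
Qed.

Lemma fuel_step_black b k : black_in_fuel b -> black_in_fuel (fuel_step b k).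
Proof.
  intros Hb x y e. rewrite fuel_step_eq.
  destruct ((x =? -11 - 2 * k) && (y =? 2 * k - 1))%bool; [intros E; inversion E; subst; simpl; discriminate|].
  destruct ((x =? -12 - 2 * k) && (y =? 2 * k))%bool; [discriminate|].
  destruct ((x =? -13 - 2 * k) && (y =? 2 * k + 1))%bool; [discriminate|]. apply Hb.
Qed.

Lemma fuel_jump b k : 0 <= k -> fuel_zone b k -> jump_move (mkPos b Red) (mkPos (fuel_step b k) Black).
Proof.
  intros Hk Hz. left. exists (-13 - 2 * k), (2 * k + 1), rpawn, [SE].
  split; [rewrite Hz by first [prove_even|lia]; apply fuel_sq_red; [intros j [J1 J2]; lia|intros [J1 J2]; lia]|].
  split; [reflexivity|]. split; [congruence|]. split.
  - split; [|exact I]. unfold jump_ok. cbn [dx dy]. split; [reflexivity|]. split.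
    + exists bpawn. rewrite Hz by first [prove_even|lia]. split; [|simpl; congruence].
      replace (-13 - 2 * k + 1) with (-12 - 2 * k) by ring. replace (2 * k + 1 + -1) with (2 * k) by ring.
      apply fuel_sq_pawn. lia.
    + rewrite Hz by first [prove_even|lia]. replace (-13 - 2 * k + 2 * 1) with (-11 - 2 * k) by ring.
      replace (2 * k + 1 + 2 * -1) with (2 * k - 1) by ring. apply fuel_sq_landing.
  - reflexivity.
Qed.

Lemma fuel_legal b k : 0 <= k -> fuel_zone b k -> legal_move (mkPos b Red) (mkPos (fuel_step b k) Black).
Proof. intros; left; apply fuel_jump; auto. Qed.

Lemma fuel_no_black_jump b k x y pc d : fuel_zone b k -> Z.odd (x + y) = false -> x + y <= -8 ->
  b x y = Some pc -> pcol pc = Black -> ~ jump_ok pc (b, x, y) d.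
Proof.
  intros Hz Ho Hxy H1 H2 J. rewrite Hz in H1 by auto.
  destruct (fuel_sq_black k x y pc H1 H2) as [j (Hj & -> & ->)].
  assert (pc = bpawn) by (rewrite fuel_sq_pawn in H1 by auto; inversion H1; auto). subst pc.
  destruct J as (Hp & _ & HL). unfold permitted, bpawn in Hp; cbn [pkind pcol] in Hp.
  pose proof (fuel_sq_near k j Hj) as (N1 & N2 & N3 & N4).
  destruct (dir_cases d) as [[E1 E2]|[[E1 E2]|[[E1 E2]|[E1 E2]]]]; try (exfalso; rewrite E2 in Hp; lia).
  - rewrite E1, E2 in HL. rewrite Hz in HL by first [prove_even|lia].
    replace (-12 - 2 * j + 2 * 1) with (-12 - 2 * j + 2) in HL by ring.
    replace (2 * j + 2 * 1) with (2 * j + 2) in HL by ring. congruence.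
  - rewrite E1, E2 in HL. rewrite Hz in HL by first [prove_even|lia].
    replace (-12 - 2 * j + 2 * -1) with (-12 - 2 * j - 2) in HL by ring.
    replace (2 * j + 2 * 1) with (2 * j + 2) in HL by ring. congruence.
Qed.

Lemma red_wins_after_king_gone b k : 0 <= k -> fuel_zone b k -> black_in_fuel b ->
  exists q, legal_move (mkPos b Red) q /\ won_for_red q.
Proof.
  intros Hk Hz Hb. exists (mkPos (fuel_step b k) Black). split; [apply fuel_legal; auto|].
  apply won_of_fuel with (k + 1); [lia|apply fuel_step_zone; auto|apply fuel_step_black; auto].
Qed.

(** * The graph drawn by the tree *)

Section Tree.

Variable c0 : CTree.

Definition addr_valid τ := exists d, subtree c0 τ = Some d.

Definition addr_inner τ := exists d, subtree c0 τ = Some d /\ has_child d.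

(* The branch of a leaf stops at its root; that of an inner node goes on forever. *)
Definition is_vertex τ h := addr_valid τ /\ on_path τ h /\ (h <= root_ht τ \/ addr_inner τ).

Lemma addr_valid_parent σ b : addr_valid (σ ++ [b]) -> addr_inner σ.
Proof.
  intros [d H]. rewrite subtree_snoc in H. destruct (subtree c0 σ) as [d0|] eqn:E; [|discriminate].
  exists d0; split; auto. exists b, d; auto.
Qed.

Lemma addr_valid_prefix σ ρ : addr_valid (σ ++ ρ) -> addr_valid σ.
Proof.
  intros [d H]. destruct (subtree c0 σ) eqn:E; [eexists; eauto|].
  rewrite subtree_app_None in H; [discriminate|auto].
Qed.

Lemma addr_inner_valid τ : addr_inner τ -> addr_valid τ.
Proof. intros [d [H _]]; exists d; auto. Qed.

Lemma is_vertex_on_path τ h : is_vertex τ h -> on_path τ h.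
Proof. intros [_ [H _]]; auto. Qed.

Definition vtx := (list nat * Z)%type.

Definition edge (v v' : vtx) : Prop :=
  is_vertex (fst v) (snd v) /\ is_vertex (fst v') (snd v') /\ snd v' = snd v + 1 /\
  (fst v' = fst v \/ exists b, fst v' = fst v ++ [b] /\ snd v = branch_ht (fst v')).

Definition vcol (v : vtx) := col (fst v) (snd v).

Lemma edge_col v v' : edge v v' -> vcol v' = vcol v \/ vcol v' = vcol v + 1.
Proof.
  destruct v as [τ h], v' as [τ' h']. unfold edge, vcol; simpl.
  intros (P1 & P2 & -> & [->|[b [-> ->]]]).
  - apply col_step. apply P1.
  - right. rewrite col_child_first. pose proof (col_branch_next τ b 0 ltac:(lia)) as X.
    rewrite Z.add_0_r in X. rewrite X. reflexivity.
Qed.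

Lemma is_vertex_prev τ h : is_vertex τ (h + 1) -> on_path τ h -> is_vertex τ h.
Proof. intros [V [G L]] Hg. split; auto. split; auto. destruct L; [left; lia|right; auto]. Qed.

Lemma is_vertex_parent σ b h : addr_valid (σ ++ [b]) -> branch_ht (σ ++ [b]) <= h -> is_vertex σ h.
Proof.
  intros V Hh. pose proof (root_ht_lt_branch_ht σ b). pose proof (root_ht_ge0 σ). split; [eapply addr_valid_prefix; eauto|]. split.
  - destruct (list_eq_dec Nat.eq_dec σ []) as [E|E]; [left; split; [auto|lia]|].
    right. split; [auto|]. pose proof (branch_ht_lt_root_ht' σ E). lia.
  - right. eapply addr_valid_parent; eauto.
Qed.

(* Here the separation of distinct branches is used: a vertex one row up and
   diagonally adjacent to a vertex is joined to it by an edge. *)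
Lemma edge_of_adjacent τ1 h τ2 : is_vertex τ1 h -> is_vertex τ2 (h + 1) ->
  (col τ2 (h + 1) = col τ1 h \/ col τ2 (h + 1) = col τ1 h + 1) -> edge (τ1, h) (τ2, h + 1).
Proof.
  intros P1 P2 Hd. unfold edge; simpl. split; auto. split; auto. split; auto.
  pose proof (is_vertex_on_path _ _ P1) as G1. pose proof (is_vertex_on_path _ _ P2) as G2.
  pose proof (on_path_nonneg _ _ G1) as Hh.
  assert (Hc : on_path τ2 h \/ (τ2 <> [] /\ branch_ht τ2 = h)).
  { destruct G2 as [[E _]|[Hn Hl]]; [left; left; auto|].
    destruct (Z.eq_dec (branch_ht τ2) h); [right; auto| left; right; split; auto; lia]. }
  destruct Hc as [Hg|[Hn Heq]].
  - destruct (list_eq_dec Nat.eq_dec τ1 τ2) as [E|E]; [left; auto|exfalso].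
    pose proof (col_step τ2 h Hg) as I2.
    destruct (col_sep τ1 τ2 h G1 Hg E) as [X|[X|[[b (E1 & E2 & E3)]|[b (E1 & E2 & E3)]]]]; try lia.
    + subst τ2. pose proof (col_child_next τ1 b). rewrite <- E2 in H. replace (h+1) with (branch_ht (τ1 ++ [b]) + 2) in Hd by lia.
      rewrite H in Hd. rewrite E2 in Hd. replace (branch_ht (τ1 ++ [b]) + 1) with h in Hd by lia. lia.
    + subst τ1. pose proof (col_branch_next τ2 b 1 ltac:(lia)) as Y1.
      pose proof (col_branch_next τ2 b 2 ltac:(lia)) as Y2.
      rewrite <- E2 in Y1. replace (branch_ht (τ2 ++ [b]) + 2) with (h + 1) in Y2 by lia. lia.
  - destruct τ2 as [|b σ _] using rev_ind; [congruence|].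
    assert (Pσ : is_vertex σ h) by (apply is_vertex_parent with b; [apply P2|lia]).
    pose proof (col_child_first σ b) as Y1. pose proof (col_branch_next σ b 0 ltac:(lia)) as Y0.
    rewrite Z.add_0_r in Y0. rewrite Heq in Y1, Y0.
    destruct (list_eq_dec Nat.eq_dec τ1 σ) as [->|E]; [right; exists b; auto|exfalso].
    destruct (col_sep τ1 σ h G1 (is_vertex_on_path _ _ Pσ) E) as [X|[X|[[b' (E1 & E2 & E3)]|[b' (E1 & E2 & E3)]]]]; try lia.
    subst τ1. destruct (Nat.lt_total b' b) as [Hl|[Hl|Hl]].
    + pose proof (sibling_root_lt_branch σ b' b Hl). pose proof (branch_ht_lt_root_ht σ b'). lia.
    + subst b'. destruct G1 as [[E0 _]|[_ HH]]; [destruct σ; discriminate|lia].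
    + pose proof (sibling_root_lt_branch σ b b' Hl). pose proof (branch_ht_lt_root_ht σ b). lia.
Qed.

Lemma col_inj τ1 τ2 h : is_vertex τ1 h -> is_vertex τ2 h -> col τ1 h = col τ2 h -> τ1 = τ2.
Proof.
  intros P1 P2 Hu. destruct (list_eq_dec Nat.eq_dec τ1 τ2) as [E|E]; auto.
  destruct (col_sep τ1 τ2 h (is_vertex_on_path _ _ P1) (is_vertex_on_path _ _ P2) E) as [X|[X|[[b (_&_&X)]|[b (_&_&X)]]]]; lia.
Qed.

Lemma edge_pred_exists τ h : is_vertex τ h -> (τ, h) <> ([], 0) -> exists τ', edge (τ', h - 1) (τ, h).
Proof.
  intros P Hn. pose proof (is_vertex_on_path _ _ P) as G. pose proof (on_path_nonneg _ _ G).
  assert (Hc : on_path τ (h - 1) \/ (τ <> [] /\ branch_ht τ = h - 1)).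
  { destruct G as [[E _]|[E Hl]].
    - subst τ. left; left; split; auto. destruct (Z.eq_dec h 0); [subst; congruence|lia].
    - destruct (Z.eq_dec (branch_ht τ) (h - 1)); [right; auto|left; right; split; auto; lia]. }
  destruct Hc as [Hg|[Hne Heq]].
  - exists τ. unfold edge; simpl. split; [apply is_vertex_prev; [replace (h - 1 + 1) with h by lia; auto|auto]|].
    split; auto. split; [lia|left; auto].
  - destruct τ as [|b σ _] using rev_ind; [congruence|]. exists σ. unfold edge; simpl.
    split; [apply is_vertex_parent with b; [apply P|lia]|]. split; auto. split; [lia|].
    right. exists b. split; auto.
Qed.

Definition ancestor (u w : vtx) := is_vertex (fst u) (snd u) /\ is_vertex (fst w) (snd w) /\
  ((fst u = fst w /\ snd u <= snd w) \/
   (exists b ρ, fst w = fst u ++ b :: ρ /\ snd u <= branch_ht (fst u ++ [b]))).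

Lemma ancestor_refl v : is_vertex (fst v) (snd v) -> ancestor v v.
Proof. intros P. split; auto. split; auto. left; split; auto; lia. Qed.

Lemma snoc_split (σ τ : list nat) c ρ b : σ ++ c :: ρ = τ ++ [b] ->
  (ρ = [] /\ σ = τ /\ c = b) \/ (exists ρ', ρ = ρ' ++ [b] /\ τ = σ ++ c :: ρ').
Proof.
  destruct ρ as [|x ρ' _] using rev_ind; intros H.
  - left. apply app_inj_tail in H. destruct H; subst; auto.
  - right. rewrite app_comm_cons, app_assoc in H. apply app_inj_tail in H.
    destruct H as [H1 H2]; subst. exists ρ'; auto.
Qed.

Lemma ancestor_edge u w w' : edge w w' -> (ancestor u w' <-> ancestor u w \/ u = w').
Proof.
  destruct u as [σ g], w as [τ h], w' as [τ' h']. unfold edge; simpl.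
  intros (P & P' & -> & [->|[b [-> Hh]]]); unfold ancestor; simpl.
  - split.
    + intros (Pu & _ & [[-> Hg]|[c [ρ [E Hg]]]]).
      * destruct (Z.eq_dec g (h + 1)) as [->|Hne]; [right; auto|].
        left. split; auto. split; auto. left; split; auto; lia.
      * left. split; auto. split; auto. right. eauto.
    + intros [(Pu & _ & [[-> Hg]|[c [ρ [E Hg]]]])|E].
      * split; auto. split; auto. left; split; auto; lia.
      * split; auto. split; auto. right; eauto.
      * inversion E; subst. split; auto. split; auto. left; split; auto; lia.
  - split.
    + intros (Pu & _ & [[-> Hg]|[c [ρ [E Hg]]]]).
      * right. destruct Pu as [_ [[[E _]|[_ Hl]] _]]; [destruct τ; discriminate|]. f_equal. lia.
      * left. split; auto. split; auto.
        destruct (snoc_split _ _ _ _ _ (eq_sym E)) as [(-> & -> & ->)|[ρ' [-> ->]]].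
        -- left; split; auto. lia.
        -- right; eauto.
    + intros [(Pu & _ & [[-> Hg]|[c [ρ [E Hg]]]])|E].
      * split; auto. split; auto. right. exists b, []. split; auto. lia.
      * split; auto. split; auto. right. exists c, (ρ ++ [b]). split; auto.
        rewrite E. rewrite <- app_assoc. reflexivity.
      * inversion E; subst. split; auto. split; auto. left; split; auto; lia.
Qed.

Lemma ancestor_height u w : ancestor u w -> snd u <= snd w /\ (snd u = snd w -> u = w).
Proof.
  destruct u as [σ g], w as [τ h]. unfold ancestor; simpl. intros (Pu & Pw & [[-> Hg]|[c [ρ [E Hg]]]]).
  - split; auto. intros ->; auto.
  - pose proof (branch_ht_first_le σ c ρ) as HF. rewrite <- E in HF.
    destruct Pw as [_ [[[E' _]|[_ Hl]] _]]; [rewrite E in E'; destruct σ; discriminate|]. split; [lia|intros; lia].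
Qed.

Definition reach := clos_trans vtx edge.

Lemma edge_height v v' : edge v v' -> snd v' = snd v + 1.
Proof. intros (_ & _ & H & _); auto. Qed.

Lemma reach_ancestor u v : reach u v -> ancestor u v /\ u <> v.
Proof.
  intros H. apply clos_trans_tn1_iff in H. induction H as [v Hs|v w Hs Hr IH].
  - split.
    + apply (proj2 (ancestor_edge u u v Hs)). left. apply ancestor_refl. apply Hs.
    + intros ->. pose proof (edge_height _ _ Hs). lia.
  - destruct IH as [IH1 IH2]. split.
    + apply (proj2 (ancestor_edge u v w Hs)). left; auto.
    + intros ->. pose proof (edge_height _ _ Hs). pose proof (ancestor_height _ _ IH1). lia.
Qed.

Lemma ancestor_reach u v : ancestor u v -> u <> v -> reach u v.
Proof.
  destruct v as [τ h]. intros Ha. remember (Z.to_nat (h - snd u)) as n eqn:En.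
  revert τ h Ha En. induction n as [|n IH]; intros τ h Ha En Hne.
  - pose proof (ancestor_height _ _ Ha) as [H1 H2]. simpl in *. exfalso. apply Hne. apply H2. lia.
  - pose proof (ancestor_height _ _ Ha) as [H1 H2]. simpl in *.
    assert (Hlt : snd u < h) by (destruct (Z.eq_dec (snd u) h); [exfalso; apply Hne; auto|lia]).
    destruct Ha as [Pu [Pw Hr]] eqn:EHa. simpl in Pw.
    assert (Hn0 : (τ, h) <> ([], 0)).
    { intros E; inversion E; subst. destruct Pu as [_ [G _]]. pose proof (on_path_nonneg _ _ G). lia. }
    destruct (edge_pred_exists τ h Pw Hn0) as [τ' Hs].
    pose proof (proj1 (ancestor_edge u _ _ Hs) Ha) as [Hp|E].
    + destruct (classic (u = (τ', h - 1))) as [->|Hne'].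
      * apply t_step. auto.
      * eapply t_trans; [apply (IH τ' (h - 1)); auto; simpl; lia|]. apply t_step; auto.
    + contradiction.
Qed.

(** * The board *)

(* The vertex [v] sits on the square [(sq_x v, sq_y v) = (4 vcol v - 2h, 2h)]
   at height [h], so that an edge, which raises the column by 0 or 1, is a
   diagonal of length 2; its middle square is [edge_sq]. *)
Definition vertex_sq (x y : Z) := exists τ h, is_vertex τ h /\ x = 4 * col τ h - 2 * h /\ y = 2 * h.

Definition edge_sq (h u u' : Z) : Z * Z :=
  if u' =? u + 1 then (4 * u - 2 * h + 1, 2 * h + 1) else (4 * u - 2 * h - 1, 2 * h + 1).

(* The edges on the path from the origin to [w], eaten by the king on its way. *)
Definition spent (w : vtx) (x y : Z) :=
  exists v v', ancestor v' w /\ edge v v' /\ (x, y) = edge_sq (snd v) (vcol v) (vcol v').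

(* Squares NE of the roots of inner nodes: a red pawn there would capture a
   king stopping at such a root. *)
Definition root_gap (x y : Z) :=
  exists τ, τ <> [] /\ addr_inner τ /\ x = 4 * col τ (root_ht τ) - 2 * root_ht τ + 1 /\ y = 2 * root_ht τ + 1.

Definition sq_x (v : vtx) := 4 * vcol v - 2 * snd v.

Definition sq_y (v : vtx) := 2 * snd v.

Definition board_of (w : vtx) (k : Z) : board := fun x y =>
  if Z.odd (x + y) then None
  else if Z_le_dec (x + y) (-8) then fuel_sq k x y
  else if dec (vertex_sq x y) then (if dec (x = sq_x w /\ y = sq_y w) then Some bking else None)
  else if dec (spent w x y) then None
  else if dec (root_gap x y) then None
  else Some rpawn.

Lemma board_of_fuel w k x y : Z.odd (x + y) = false -> x + y <= -8 -> board_of w k x y = fuel_sq k x y.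
Proof. intros H1 H2. unfold board_of. rewrite H1. destruct (Z_le_dec (x + y) (-8)); [reflexivity|lia]. Qed.

Lemma board_of_light w k x y : Z.odd (x + y) = true -> board_of w k x y = None.
Proof. intros H. unfold board_of. rewrite H. reflexivity. Qed.

Lemma board_of_vertex w k x y : Z.odd (x + y) = false -> -8 < x + y -> vertex_sq x y ->
  board_of w k x y = if dec (x = sq_x w /\ y = sq_y w) then Some bking else None.
Proof.
  intros H1 H2 H3. unfold board_of. rewrite H1. destruct (Z_le_dec (x + y) (-8)); [lia|].
  destruct (dec (vertex_sq x y)); [reflexivity|contradiction].
Qed.

Lemma board_of_nonvertex w k x y : Z.odd (x + y) = false -> -8 < x + y -> ~ vertex_sq x y ->
  board_of w k x y = if dec (spent w x y) then None else if dec (root_gap x y) then None else Some rpawn.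
Proof.
  intros H1 H2 H3. unfold board_of. rewrite H1. destruct (Z_le_dec (x + y) (-8)); [lia|].
  destruct (dec (vertex_sq x y)); [contradiction|reflexivity].
Qed.

Lemma odd_row_not_vertex x y : Z.odd y = true -> ~ vertex_sq x y.
Proof.
  intros H [τ [h [_ [_ ->]]]]. rewrite Z.odd_mul in H. simpl in H. discriminate.
Qed.

Lemma edge_sq_y h u u' : snd (edge_sq h u u') = 2 * h + 1.
Proof. unfold edge_sq. destruct (u' =? u + 1); reflexivity. Qed.

Lemma odd_2h1 h : Z.odd (2 * h + 1) = true.
Proof. rewrite Z.odd_add, Z.odd_mul. reflexivity. Qed.

Lemma spent_odd_row w x y : spent w x y -> Z.odd y = true.
Proof.
  intros (v & v' & _ & _ & E). pose proof (edge_sq_y (snd v) (vcol v) (vcol v')) as Hy.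
  rewrite <- E in Hy. simpl in Hy. subst y. apply odd_2h1.
Qed.

Lemma root_gap_odd_row x y : root_gap x y -> Z.odd y = true.
Proof. intros (τ & _ & _ & _ & ->). apply odd_2h1. Qed.

Lemma sq_dark v : Z.odd (sq_x v + sq_y v) = false.
Proof. unfold sq_x, sq_y. replace (4 * vcol v - 2 * snd v + 2 * snd v) with (2 * (2 * vcol v)) by ring.
  rewrite Z.odd_mul. reflexivity. Qed.

Lemma vcol_nonneg v : is_vertex (fst v) (snd v) -> 0 <= vcol v.
Proof. intros P. apply col_nonneg. apply P. Qed.

Lemma vertex_sq_of v : is_vertex (fst v) (snd v) -> vertex_sq (sq_x v) (sq_y v).
Proof. intros P. exists (fst v), (snd v). split; auto. Qed.

Lemma sq_inj v v' : is_vertex (fst v) (snd v) -> is_vertex (fst v') (snd v') ->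
  sq_x v = sq_x v' -> sq_y v = sq_y v' -> v = v'.
Proof.
  destruct v as [τ h], v' as [τ' h']. unfold sq_x, sq_y, vcol; cbn [fst snd]. intros P P' E1 E2.
  assert (h = h') by lia. subst h'. assert (col τ h = col τ' h) by lia.
  f_equal. eapply col_inj; eauto.
Qed.

Lemma board_of_king w k : is_vertex (fst w) (snd w) -> board_of w k (sq_x w) (sq_y w) = Some bking.
Proof.
  intros P. pose proof (vcol_nonneg w P). rewrite board_of_vertex.
  - destruct (dec (sq_x w = sq_x w /\ sq_y w = sq_y w)) as [_|n]; [reflexivity|tauto].
  - apply sq_dark.
  - unfold sq_x, sq_y. lia.
  - apply vertex_sq_of; auto.
Qed.

Lemma board_of_other_vertex w k v : is_vertex (fst v) (snd v) -> is_vertex (fst w) (snd w) -> v <> w ->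
  board_of w k (sq_x v) (sq_y v) = None.
Proof.
  intros P Pw Hne. pose proof (vcol_nonneg v P). rewrite board_of_vertex.
  - destruct (dec (sq_x v = sq_x w /\ sq_y v = sq_y w)) as [[E1 E2]|n]; [|reflexivity].
    exfalso. apply Hne. apply sq_inj; auto.
  - apply sq_dark.
  - unfold sq_x, sq_y. lia.
  - apply vertex_sq_of; auto.
Qed.

Lemma edge_sq_inj h u u' h2 u2 u2' :
  (u' = u \/ u' = u + 1) -> (u2' = u2 \/ u2' = u2 + 1) ->
  edge_sq h u u' = edge_sq h2 u2 u2' -> h = h2 /\ u = u2 /\ u' = u2'.
Proof.
  intros H1 H2. unfold edge_sq.
  destruct (Z.eqb_spec u' (u + 1)), (Z.eqb_spec u2' (u2 + 1)); intros E; apply pair_equal_spec in E; destruct E as [E1 E2].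
  all: lia.
Qed.

Lemma edge_pred_unique a b v : edge a v -> edge b v -> a = b.
Proof.
  destruct a as [τa ha], b as [τb hb], v as [τ h]. unfold edge; cbn [fst snd].
  intros (Pa & Pv & Ha & Ea) (Pb & _ & Hb' & Eb).
  assert (ha = hb) by lia. subst hb.
  destruct Ea as [->|[c [-> Hc]]], Eb as [E|[c' [E Hc']]].
  - subst; reflexivity.
  - exfalso. destruct Pa as [_ [[[E1 _]|[_ Hl]] _]].
    + rewrite E1 in E. destruct τb; discriminate.
    + lia.
  - exfalso. destruct Pb as [_ [[[E1 _]|[_ Hl]] _]].
    + rewrite E1 in E. destruct τa; discriminate.
    + subst τb; lia.
  - apply app_inj_tail in E. destruct E as [-> ->]. reflexivity.
Qed.

Lemma edge_vertex_l v v' : edge v v' -> is_vertex (fst v) (snd v).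
Proof. intros (P & _); auto. Qed.

Lemma edge_vertex_r v v' : edge v v' -> is_vertex (fst v') (snd v').
Proof. intros (_ & P & _); auto. Qed.

Lemma spent_last w v : edge w v ->
  spent v (fst (edge_sq (snd w) (vcol w) (vcol v))) (snd (edge_sq (snd w) (vcol w) (vcol v))).
Proof.
  intros Hs. exists w, v. split; [apply ancestor_refl; eapply edge_vertex_r; eauto|]. split; auto.
  destruct (edge_sq _ _ _); reflexivity.
Qed.

Lemma ancestor_vertex_r u w : ancestor u w -> is_vertex (fst w) (snd w).
Proof. intros (_ & P & _); auto. Qed.

Lemma vertex_eq v v' : is_vertex (fst v) (snd v) -> is_vertex (fst v') (snd v') ->
  snd v = snd v' -> vcol v = vcol v' -> v = v'.
Proof.
  destruct v as [τ h], v' as [τ' h']. unfold vcol; cbn [fst snd]. intros P P' -> E.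
  f_equal. eapply col_inj; eauto.
Qed.

Lemma not_spent_next w v : edge w v ->
  ~ spent w (fst (edge_sq (snd w) (vcol w) (vcol v))) (snd (edge_sq (snd w) (vcol w) (vcol v))).
Proof.
  intros Hs (a & b & Hanc & Hab & E).
  assert (E' : edge_sq (snd w) (vcol w) (vcol v) = edge_sq (snd a) (vcol a) (vcol b)).
  { rewrite <- E. destruct (edge_sq _ _ _); reflexivity. }
  pose proof (edge_col _ _ Hs) as U1. pose proof (edge_col _ _ Hab) as U2.
  destruct (edge_sq_inj _ _ _ _ _ _ U1 U2 E') as (H1 & H2 & H3).
  pose proof (edge_height _ _ Hs). pose proof (edge_height _ _ Hab).
  assert (b = v).
  { apply vertex_eq; [eapply edge_vertex_r; eauto|eapply edge_vertex_r; eauto|lia|lia]. }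
  subst b. pose proof (ancestor_height _ _ Hanc). lia.
Qed.

Lemma spent_edge w v x y : edge w v ->
  (spent v x y <-> spent w x y \/ (x, y) = edge_sq (snd w) (vcol w) (vcol v)).
Proof.
  intros Hs. split.
  - intros (a & b & Hanc & Hab & E). apply (ancestor_edge _ _ _ Hs) in Hanc. destruct Hanc as [Hanc| ->].
    + left. exists a, b. auto.
    + right. rewrite (edge_pred_unique a w v Hab Hs) in E. auto.
  - intros [(a & b & Hanc & Hab & E)|E].
    + exists a, b. split; auto. apply (ancestor_edge _ _ _ Hs). left; auto.
    + exists w, v. split; [apply ancestor_refl; eapply edge_vertex_r; eauto|]. auto.
Qed.

Lemma inner_root_vertex τ : τ <> [] -> addr_inner τ -> is_vertex τ (root_ht τ).
Proof.
  intros Hn Hl. split; [apply addr_inner_valid; auto|]. split; [right; split; auto; pose proof (branch_ht_lt_root_ht' τ Hn); lia|].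
  left; lia.
Qed.

Lemma inner_root_edge_col τ v : τ <> [] -> edge (τ, root_ht τ) v -> vcol v = col τ (root_ht τ).
Proof.
  intros Hn. destruct v as [τ' h']. unfold edge, vcol; cbn [fst snd].
  intros (P & P' & -> & [->|[b [-> Hh]]]).
  - apply col_root_next.
  - exfalso. pose proof (root_ht_lt_branch_ht τ b). lia.
Qed.

Lemma root_gap_edge x y v u' : is_vertex (fst v) (snd v) -> (u' = vcol v \/ u' = vcol v + 1) ->
  root_gap x y -> (x, y) = edge_sq (snd v) (vcol v) u' ->
  fst v <> [] /\ addr_inner (fst v) /\ snd v = root_ht (fst v) /\ u' = vcol v + 1.
Proof.
  intros P Hu (τ & Hn & Hl & Ex & Ey) E. unfold edge_sq in E.
  destruct (Z.eqb_spec u' (vcol v + 1)) as [H|H]; apply pair_equal_spec in E; destruct E as [E1 E2]; subst x y.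
  - assert (Hh : snd v = root_ht τ) by lia.
    assert (Hu' : vcol v = col τ (root_ht τ)) by lia.
    assert (fst v = τ).
    { unfold vcol in Hu'. rewrite Hh in Hu', P. eapply col_inj; eauto. apply inner_root_vertex; auto. }
    subst τ. auto.
  - lia.
Qed.

Lemma edge_sq_up w v d : edge w v -> sq_x v = sq_x w + 2 * dx d -> dy d = 1 ->
  edge_sq (snd w) (vcol w) (vcol v) = (sq_x w + dx d, sq_y w + 1).
Proof.
  intros Hs Hx Hy. pose proof (edge_height _ _ Hs) as Hh. unfold sq_x, sq_y in *. rewrite Hh in Hx.
  unfold edge_sq. destruct (dir_cases d) as [[E1 E2]|[[E1 E2]|[[E1 E2]|[E1 E2]]]]; try lia.
  - rewrite E1 in *. assert (vcol v = vcol w + 1) by lia. rewrite H, Z.eqb_refl. f_equal; lia.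
  - rewrite E1 in *. assert (vcol v = vcol w) by lia. rewrite H.
    replace (vcol w =? vcol w + 1) with false by (symmetry; apply Z.eqb_neq; lia). f_equal; lia.
Qed.

Lemma edge_sq_down v w d : edge v w -> sq_x v = sq_x w + 2 * dx d -> dy d = -1 ->
  edge_sq (snd v) (vcol v) (vcol w) = (sq_x w + dx d, sq_y w - 1).
Proof.
  intros Hs Hx Hy. pose proof (edge_height _ _ Hs) as Hh. unfold sq_x, sq_y in *. rewrite Hh in *.
  unfold edge_sq. destruct (dir_cases d) as [[E1 E2]|[[E1 E2]|[[E1 E2]|[E1 E2]]]]; try lia.
  - rewrite E1 in *. assert (vcol w = vcol v) by lia. rewrite H.
    replace (vcol v =? vcol v + 1) with false by (symmetry; apply Z.eqb_neq; lia). f_equal; lia.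
  - rewrite E1 in *. assert (vcol w = vcol v + 1) by lia. rewrite H, Z.eqb_refl. f_equal; lia.
Qed.

Lemma board_of_edge_red w k x y : Z.odd (x + y) = false -> -8 < x + y -> Z.odd y = true ->
  ~ spent w x y -> ~ root_gap x y -> board_of w k x y = Some rpawn.
Proof.
  intros H1 H2 H3 H4 H5. rewrite board_of_nonvertex; auto; [|apply odd_row_not_vertex; auto].
  destruct (dec (spent w x y)); [contradiction|]. destruct (dec (root_gap x y)); [contradiction|reflexivity].
Qed.

Lemma board_of_spent w k x y : Z.odd (x + y) = false -> -8 < x + y -> Z.odd y = true ->
  spent w x y -> board_of w k x y = None.
Proof.
  intros H1 H2 H3 H4. rewrite board_of_nonvertex; auto; [|apply odd_row_not_vertex; auto].
  destruct (dec (spent w x y)); [reflexivity|contradiction].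
Qed.

Lemma board_of_even_nonvertex w k x y : Z.odd (x + y) = false -> -8 < x + y -> Z.odd y = false ->
  ~ vertex_sq x y -> board_of w k x y = Some rpawn.
Proof.
  intros H1 H2 H3 H4. rewrite board_of_nonvertex; auto.
  destruct (dec (spent w x y)) as [c|_]; [apply spent_odd_row in c; congruence|].
  destruct (dec (root_gap x y)) as [c|_]; [apply root_gap_odd_row in c; congruence|reflexivity].
Qed.

(** * Moves of the king *)

Lemma king_jump_up w k d : is_vertex (fst w) (snd w) -> dy d = 1 ->
  (jump_ok bking (board_of w k, sq_x w, sq_y w) d <-> exists v, edge w v /\ sq_x v = sq_x w + 2 * dx d /\ sq_y v = sq_y w + 2).
Proof.
  intros Pw Hy. pose proof (vcol_nonneg w Pw) as HU. unfold jump_ok. rewrite Hy. split.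
  - intros (_ & _ & HL).
    assert (Hdx : dx d = 1 \/ dx d = -1) by (destruct (dir_cases d); lia).
    assert (Hev : Z.odd (sq_x w + 2 * dx d + (sq_y w + 2 * 1)) = false).
    { unfold sq_x, sq_y. replace (4 * vcol w - 2 * snd w + 2 * dx d + (2 * snd w + 2 * 1)) with (2 * (2 * vcol w + dx d + 1)) by ring.
      rewrite Z.odd_mul. reflexivity. }
    destruct (classic (vertex_sq (sq_x w + 2 * dx d) (sq_y w + 2 * 1))) as [T|T].
    + destruct T as (τ' & h' & P' & Ex & Ey). unfold sq_y in Ey. assert (h' = snd w + 1) by lia. subst h'.
      exists (τ', snd w + 1). destruct w as [τ h]. cbn [fst snd] in *.
      assert (Hs : edge (τ, h) (τ', h + 1)).
      { apply edge_of_adjacent; auto. unfold sq_x, vcol in Ex; cbn [fst snd] in Ex. destruct Hdx; [right|left]; lia. }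
      split; [exact Hs|]. unfold sq_x, sq_y, vcol in *; cbn [fst snd] in *. split; lia.
    + rewrite board_of_even_nonvertex in HL; [discriminate|exact Hev| | |exact T].
      * unfold sq_x, sq_y. destruct Hdx; lia.
      * unfold sq_y. replace (2 * snd w + 2 * 1) with (2 * (snd w + 1)) by ring. rewrite Z.odd_mul. reflexivity.
  - intros (v & Hs & Hx & Hv). split; [exact I|]. split.
    + exists rpawn. split; [|simpl; congruence].
      pose proof (edge_sq_up w v d Hs Hx Hy) as PE.
      pose proof (edge_col _ _ Hs) as HUv.
      assert (Hdx : dx d = 1 \/ dx d = -1) by (destruct (dir_cases d); lia).
      apply board_of_edge_red.
      * unfold sq_x, sq_y. replace (4 * vcol w - 2 * snd w + dx d + (2 * snd w + 1)) with (4 * vcol w + dx d + 1) by ring.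
        destruct Hdx as [-> | ->]; [replace (4 * vcol w + 1 + 1) with (2 * (2 * vcol w + 1)) by ring
                                   |replace (4 * vcol w + -1 + 1) with (2 * (2 * vcol w)) by ring]; rewrite Z.odd_mul; reflexivity.
      * unfold sq_x, sq_y. destruct Hdx; lia.
      * unfold sq_y. apply odd_2h1.
      * intros C. apply (not_spent_next w v Hs). rewrite PE. exact C.
      * intros C. destruct (root_gap_edge _ _ w (vcol v) Pw HUv C (eq_sym PE)) as (Hn & Hl & Hr & Hu).
        destruct w as [τ h]. cbn [fst snd] in *. subst h.
        pose proof (inner_root_edge_col τ v Hn Hs). unfold vcol in *; cbn [fst snd] in *. lia.
    + replace (sq_x w + 2 * dx d) with (sq_x v) by lia. replace (sq_y w + 2 * 1) with (sq_y v) by lia.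
      apply board_of_other_vertex; [eapply edge_vertex_r; eauto|auto|].
      intros ->. pose proof (edge_height _ _ Hs). lia.
Qed.

Lemma king_no_jump_down w k d : is_vertex (fst w) (snd w) -> dy d = -1 -> ~ jump_ok bking (board_of w k, sq_x w, sq_y w) d.
Proof.
  intros Pw Hy. pose proof (vcol_nonneg w Pw) as HU. unfold jump_ok. rewrite Hy.
  intros (_ & (e & He & _) & HL).
  assert (Hdx : dx d = 1 \/ dx d = -1) by (destruct (dir_cases d); lia).
  destruct (classic (vertex_sq (sq_x w + 2 * dx d) (sq_y w + 2 * -1))) as [T|T].
  - destruct T as (τ' & h' & P' & Ex & Ey). unfold sq_y in Ey. assert (h' = snd w - 1) by lia. subst h'.
    destruct w as [τ h]. cbn [fst snd] in *.
    assert (Hs : edge (τ', h - 1) (τ, h)).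
    { replace h with (h - 1 + 1) at 2 by lia. apply edge_of_adjacent; auto.
      - replace (h - 1 + 1) with h by lia. auto.
      - replace (h - 1 + 1) with h by lia. unfold sq_x, vcol in Ex; cbn [fst snd] in Ex. destruct Hdx; [left|right]; lia. }
    pose proof (edge_sq_down (τ', h - 1) (τ, h) d Hs) as PD.
    assert (sq_x (τ', h - 1) = sq_x (τ, h) + 2 * dx d) by (unfold sq_x, vcol in *; cbn [fst snd] in *; lia).
    specialize (PD H Hy).
    rewrite board_of_spent in He; [discriminate| | | |].
    + unfold sq_x, sq_y, vcol; cbn [fst snd]. replace (4 * col τ h - 2 * h + dx d + (2 * h + -1)) with (4 * col τ h + dx d - 1) by ring.
      destruct Hdx as [-> | ->]; [replace (4 * col τ h + 1 - 1) with (2 * (2 * col τ h)) by ring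
                                 |replace (4 * col τ h + -1 - 1) with (2 * (2 * col τ h - 1)) by ring]; rewrite Z.odd_mul; reflexivity.
    + unfold sq_x, sq_y, vcol in *; cbn [fst snd] in *. destruct Hdx; lia.
    + unfold sq_y; cbn [snd]. replace (2 * h + -1) with (2 * (h - 1) + 1) by ring. apply odd_2h1.
    + pose proof (spent_last _ _ Hs) as C. rewrite PD in C. cbn [fst snd] in C.
      replace (sq_y (τ, h) + dy d) with (sq_y (τ, h) - 1) by lia. exact C.
  - rewrite board_of_even_nonvertex in HL; [discriminate| | | |auto].
    + unfold sq_x, sq_y. replace (4 * vcol w - 2 * snd w + 2 * dx d + (2 * snd w + 2 * -1)) with (2 * (2 * vcol w + dx d - 1)) by ring.
      rewrite Z.odd_mul. reflexivity.
    + unfold sq_x, sq_y. destruct Hdx; lia.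
    + unfold sq_y. replace (2 * snd w + 2 * -1) with (2 * (snd w - 1)) by ring. rewrite Z.odd_mul. reflexivity.
Qed.

Lemma board_of_edge_agree w v k x y : edge w v -> ~ (x = sq_x w /\ y = sq_y w) -> ~ (x = sq_x v /\ y = sq_y v) ->
  (x, y) <> edge_sq (snd w) (vcol w) (vcol v) -> board_of w k x y = board_of v k x y.
Proof.
  intros Hs H1 H2 H3. unfold board_of.
  destruct (Z.odd (x + y)); auto. destruct (Z_le_dec (x + y) (-8)); auto.
  destruct (dec (vertex_sq x y)).
  - destruct (dec (x = sq_x w /\ y = sq_y w)); [contradiction|]. destruct (dec (x = sq_x v /\ y = sq_y v)); [contradiction|auto].
  - pose proof (spent_edge w v x y Hs) as C.
    destruct (dec (spent w x y)) as [c1|c1], (dec (spent v x y)) as [c2|c2]; auto.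
    + exfalso. apply c2. apply C. left; auto.
    + exfalso. apply C in c2. destruct c2; contradiction.
Qed.

Lemma edge_dir w v : edge w v -> exists d, dy d = 1 /\ sq_x v = sq_x w + 2 * dx d /\ sq_y v = sq_y w + 2.
Proof.
  intros Hs. pose proof (edge_height _ _ Hs) as Hh. pose proof (edge_col _ _ Hs) as HU.
  unfold sq_x, sq_y. rewrite Hh. destruct HU as [E|E].
  - exists NW. cbn [dx dy]. split; auto. split; lia.
  - exists NE. cbn [dx dy]. split; auto. split; lia.
Qed.

Lemma king_jump_step w v k d : edge w v -> sq_x v = sq_x w + 2 * dx d -> sq_y v = sq_y w + 2 * dy d ->
  jump_step bking (board_of w k, sq_x w, sq_y w) d = (board_of v k, sq_x v, sq_y v).
Proof.
  intros Hs Hx Hy. pose proof (edge_height _ _ Hs) as Hh.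
  assert (Hdy : dy d = 1) by (unfold sq_y in Hy; lia).
  pose proof (edge_sq_up w v d Hs Hx Hdy) as PE.
  pose proof (edge_vertex_l _ _ Hs) as Pw. pose proof (edge_vertex_r _ _ Hs) as Pv.
  pose proof (vcol_nonneg w Pw) as HU.
  assert (Hdx : dx d = 1 \/ dx d = -1) by (destruct (dir_cases d); lia).
  unfold jump_step. rewrite Hx, Hy. f_equal. f_equal.
  apply functional_extensionality; intros x. apply functional_extensionality; intros y.
  unfold upd.
  destruct ((x =? sq_x w + 2 * dx d) && (y =? sq_y w + 2 * dy d))%bool eqn:E1.
  { apply andb_true_iff in E1. destruct E1 as [E1 E2]. apply Z.eqb_eq in E1, E2.
    rewrite <- Hx in E1. rewrite <- Hy in E2. subst. rewrite board_of_king; auto. }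
  destruct ((x =? sq_x w + dx d) && (y =? sq_y w + dy d))%bool eqn:E2.
  { apply andb_true_iff in E2. destruct E2 as [E2 E3]. apply Z.eqb_eq in E2, E3. subst x y.
    rewrite Hdy in *. symmetry. apply board_of_spent.
    - unfold sq_x, sq_y. replace (4 * vcol w - 2 * snd w + dx d + (2 * snd w + 1)) with (4 * vcol w + dx d + 1) by ring.
      destruct Hdx as [-> | ->]; [replace (4 * vcol w + 1 + 1) with (2 * (2 * vcol w + 1)) by ring
                                 |replace (4 * vcol w + -1 + 1) with (2 * (2 * vcol w)) by ring]; rewrite Z.odd_mul; reflexivity.
    - unfold sq_x, sq_y. destruct Hdx; lia.
    - unfold sq_y. apply odd_2h1.
    - pose proof (spent_last w v Hs) as C. rewrite PE in C. exact C. }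
  destruct ((x =? sq_x w) && (y =? sq_y w))%bool eqn:E3.
  { apply andb_true_iff in E3. destruct E3 as [E3 E4]. apply Z.eqb_eq in E3, E4. subst x y.
    symmetry. apply board_of_other_vertex; auto. intros ->. lia. }
  apply board_of_edge_agree; auto.
  - intros [-> ->]. rewrite !Z.eqb_refl in E3. discriminate.
  - intros [-> ->]. rewrite Hx, Hy, !Z.eqb_refl in E1. discriminate.
  - rewrite PE. intros E. apply pair_equal_spec in E. destruct E as [-> ->]. rewrite Hdy, !Z.eqb_refl in E2. discriminate.
Qed.

Lemma king_jumps_reach k ds : forall w, is_vertex (fst w) (snd w) -> jumps_ok bking (board_of w k, sq_x w, sq_y w) ds ->
  exists v, ((ds = [] /\ v = w) \/ (ds <> [] /\ reach w v)) /\
            jumps_result bking (board_of w k, sq_x w, sq_y w) ds = (board_of v k, sq_x v, sq_y v).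
Proof.
  induction ds as [|d ds IH]; intros w Pw H.
  - exists w. split; [left; auto|reflexivity].
  - destruct H as [J Js].
    destruct (dir_cases d) as [[E1 E2]|[[E1 E2]|[[E1 E2]|[E1 E2]]]];
      try (exfalso; eapply king_no_jump_down; eauto; fail).
    all: destruct (proj1 (king_jump_up w k d Pw E2) J) as (v1 & Hs & Hx & Hy);
         rewrite (king_jump_step w v1 k d Hs Hx ltac:(rewrite E2; lia)) in Js;
         destruct (IH v1 (edge_vertex_r _ _ Hs) Js) as (v & Hv & R);
         exists v; split;
         [ right; split; [congruence|]; destruct Hv as [[_ ->]|[_ Hr]]; [apply t_step; auto| eapply t_trans; [apply t_step; eauto|auto]]
         | unfold jumps_result; cbn [fold_left]; rewrite (king_jump_step w v1 k d Hs Hx ltac:(rewrite E2; lia)); exact R ].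
Qed.

Lemma reach_king_jumps k w v : reach w v -> exists ds, ds <> [] /\ jumps_ok bking (board_of w k, sq_x w, sq_y w) ds /\
  jumps_result bking (board_of w k, sq_x w, sq_y w) ds = (board_of v k, sq_x v, sq_y v).
Proof.
  intros H. apply clos_trans_t1n_iff in H. induction H as [w v Hs|w v1 v Hs Hr IH].
  - destruct (edge_dir w v Hs) as (d & Hd & Hx & Hy). exists [d]. split; [congruence|].
    split.
    + split; [apply (king_jump_up w k d (edge_vertex_l _ _ Hs) Hd); eauto|exact I].
    + unfold jumps_result; cbn [fold_left]. apply king_jump_step; auto. lia.
  - destruct IH as (ds & Hn & J & R). destruct (edge_dir w v1 Hs) as (d & Hd & Hx & Hy).
    exists (d :: ds). split; [congruence|]. split.
    + split; [apply (king_jump_up w k d (edge_vertex_l _ _ Hs) Hd); eauto|].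
      rewrite (king_jump_step w v1 k d Hs Hx ltac:(lia)). exact J.
    + unfold jumps_result; cbn [fold_left]. rewrite (king_jump_step w v1 k d Hs Hx ltac:(lia)). exact R.
Qed.

Lemma king_jiter k w s : is_vertex (fst w) (snd w) ->
  (forall n, jump_ok bking (jiter bking (board_of w k, sq_x w, sq_y w) s n) (s n)) ->
  forall n, exists v, is_vertex (fst v) (snd v) /\ jiter bking (board_of w k, sq_x w, sq_y w) s n = (board_of v k, sq_x v, sq_y v).
Proof.
  intros Pw Hj n. induction n as [|n IH].
  - exists w. split; auto.
  - destruct IH as (v & Pv & E). simpl. rewrite E. specialize (Hj n). rewrite E in Hj.
    destruct (dir_cases (s n)) as [[E1 E2]|[[E1 E2]|[[E1 E2]|[E1 E2]]]];
      try (exfalso; eapply king_no_jump_down; eauto; fail).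
    all: destruct (proj1 (king_jump_up v k (s n) Pv E2) Hj) as (v1 & Hs & Hx & Hy);
         exists v1; split; [eapply edge_vertex_r; eauto|]; apply king_jump_step; auto; lia.
Qed.

Lemma board_of_black w k x y e : is_vertex (fst w) (snd w) -> board_of w k x y = Some e -> pcol e = Black ->
  (x = sq_x w /\ y = sq_y w) \/ (x + y <= -8 /\ exists j, k <= j /\ x = -12 - 2 * j /\ y = 2 * j).
Proof.
  intros Pw. unfold board_of. destruct (Z.odd (x + y)); [discriminate|].
  destruct (Z_le_dec (x + y) (-8)) as [Hz|Hz].
  - intros H1 H2. right. split; auto. eapply fuel_sq_black; eauto.
  - destruct (dec (vertex_sq x y)).
    + destruct (dec (x = sq_x w /\ y = sq_y w)); [left; auto|discriminate].
    + destruct (dec (spent w x y)); [discriminate|]. destruct (dec (root_gap x y)); [discriminate|].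
      intros E; inversion E; subst; simpl; discriminate.
Qed.

Lemma board_of_fuel_zone w k : fuel_zone (board_of w k) k.
Proof. intros x y H1 H2. apply board_of_fuel; auto. Qed.

Lemma fuel_step_board_of w k : 0 <= k -> fuel_step (board_of w k) k = board_of w (k + 1).
Proof.
  intros Hk. apply functional_extensionality; intros x. apply functional_extensionality; intros y.
  destruct (Z.odd (x + y)) eqn:Eo.
  - rewrite board_of_light by auto. rewrite fuel_step_eq.
    destruct ((x =? -11 - 2 * k) && (y =? 2 * k - 1))%bool eqn:E1.
    { apply andb_true_iff in E1. destruct E1 as [E1 E2]. apply Z.eqb_eq in E1, E2. subst.
      exfalso. replace (-11 - 2 * k + (2 * k - 1)) with (2 * (-6)) in Eo by ring. rewrite Z.odd_mul in Eo. discriminate. }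
    destruct ((x =? -12 - 2 * k) && (y =? 2 * k))%bool eqn:E2; [reflexivity|].
    destruct ((x =? -13 - 2 * k) && (y =? 2 * k + 1))%bool eqn:E3; [reflexivity|].
    apply board_of_light; auto.
  - destruct (Z_le_dec (x + y) (-8)) as [Hz|Hz].
    + rewrite (fuel_step_zone (board_of w k) k Hk (board_of_fuel_zone w k)) by auto. rewrite board_of_fuel; auto.
    + rewrite fuel_step_eq.
      destruct ((x =? -11 - 2 * k) && (y =? 2 * k - 1))%bool eqn:E1.
      { apply andb_true_iff in E1. destruct E1 as [E1 E2]. apply Z.eqb_eq in E1, E2. lia. }
      destruct ((x =? -12 - 2 * k) && (y =? 2 * k))%bool eqn:E2.
      { apply andb_true_iff in E2. destruct E2 as [E2 E3]. apply Z.eqb_eq in E2, E3. lia. }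
      destruct ((x =? -13 - 2 * k) && (y =? 2 * k + 1))%bool eqn:E3.
      { apply andb_true_iff in E3. destruct E3 as [E3 E4]. apply Z.eqb_eq in E3, E4. lia. }
      unfold board_of. rewrite Eo. destruct (Z_le_dec (x + y) (-8)); [lia|reflexivity].
Qed.

Lemma sq_sum_nonneg v : is_vertex (fst v) (snd v) -> 0 <= sq_x v + sq_y v.
Proof. intros P. pose proof (vcol_nonneg v P). unfold sq_x, sq_y. lia. Qed.

Lemma king_reach_jump k w v : reach w v ->
  jump_move (mkPos (board_of w k) Black) (mkPos (board_of v k) Red).
Proof.
  intros Hr. destruct (reach_ancestor _ _ Hr) as [[Pw _] _].
  destruct (reach_king_jumps k w v Hr) as (ds & Hn & J & R).
  left. exists (sq_x w), (sq_y w), bking, ds.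
  split; [apply board_of_king; auto|]. split; [reflexivity|]. split; auto. split; auto.
  cbn [brd to_move]. rewrite R. reflexivity.
Qed.

Lemma king_has_jump w k v : edge w v -> exists q, jump_move (mkPos (board_of w k) Black) q.
Proof. intros Hs. eexists. apply king_reach_jump, t_step, Hs. Qed.

Lemma black_moves w k q : is_vertex (fst w) (snd w) -> (exists v, edge w v) ->
  legal_move (mkPos (board_of w k) Black) q ->
  (exists v, reach w v /\ q = mkPos (board_of v k) Red) \/
  (to_move q = Red /\ fuel_zone (brd q) k /\ black_in_fuel (brd q)).
Proof.
  intros Pw [v0 Hv0] Hl. destruct Hl as [[Hf|Hi]|[Hn _]].
  - left. destruct Hf as (x & y & pc & ds & H1 & H2 & Hn & J & Hq). cbn [brd to_move] in *.
    destruct (board_of_black w k x y pc Pw H1 H2) as [[-> ->]|[Hz [j (Hj & -> & ->)]]].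
    + rewrite board_of_king in H1 by auto. inversion H1; subst pc.
      destruct (king_jumps_reach k ds w Pw J) as (v & [[E _]|[_ Hr]] & R); [contradiction|].
      exists v. split; auto. rewrite R in Hq. exact Hq.
    + destruct ds as [|d ds]; [congruence|]. destruct J as [J _]. exfalso.
      eapply (fuel_no_black_jump (board_of w k) k); eauto; [apply board_of_fuel_zone|prove_even].
  - right. destruct Hi as (x & y & pc & s & H1 & H2 & J & Ht & Hq). cbn [brd to_move] in *.
    destruct (board_of_black w k x y pc Pw H1 H2) as [[-> ->]|[Hz [j (Hj & -> & ->)]]].
    2: { exfalso. eapply (fuel_no_black_jump (board_of w k) k); eauto; [apply board_of_fuel_zone|prove_even|apply (J 0%nat)]. }
    rewrite board_of_king in H1 by auto. inversion H1; subst pc.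
    pose proof (king_jiter k w s Pw J) as Inv.
    assert (Far : forall u v, ((u = sq_x w /\ v = sq_y w) \/
        (exists n, let '(_, xn, yn) := jiter bking (board_of w k, sq_x w, sq_y w) s n in u = xn + dx (s n) /\ v = yn + dy (s n)))
        -> -8 < u + v).
    { intros u v [[-> ->]|[n Hn]].
      - pose proof (sq_sum_nonneg w Pw). lia.
      - destruct (Inv n) as (vn & Pn & E). rewrite E in Hn. cbn beta iota in Hn. destruct Hn as [-> ->].
        pose proof (sq_sum_nonneg vn Pn). destruct (dir_cases (s n)) as [[E1 E2]|[[E1 E2]|[[E1 E2]|[E1 E2]]]]; lia. }
    split; [rewrite Ht; reflexivity|]. split.
    + intros u v Ho Hz. specialize (Hq u v). cbv zeta in Hq. destruct Hq as [_ Hq].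
      rewrite Hq; [apply board_of_fuel; auto|]. intros R. apply Far in R. lia.
    + intros u v e He Hb. specialize (Hq u v). cbv zeta in Hq. destruct Hq as [Hq1 Hq2].
      destruct (classic ((u = sq_x w /\ v = sq_y w) \/
        (exists n, let '(_, xn, yn) := jiter bking (board_of w k, sq_x w, sq_y w) s n in u = xn + dx (s n) /\ v = yn + dy (s n)))) as [R|R].
      * rewrite (Hq1 R) in He. discriminate.
      * rewrite (Hq2 R) in He. destruct (board_of_black w k u v e Pw He Hb) as [[-> ->]|[Hz [j (Hj & -> & ->)]]].
        -- exfalso. apply R. left; auto.
        -- split; [prove_even|lia].
  - exfalso. apply Hn. apply (king_has_jump w k v0 Hv0).
Qed.

(** * Red's replies *)

Lemma king_captured_fuel w k x1 y1 x3 y3 : is_vertex (fst w) (snd w) -> -8 < x1 + y1 -> -8 < x3 + y3 ->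
  let b := upd (upd (upd (board_of w k) x1 y1 None) (sq_x w) (sq_y w) None) x3 y3 (Some rpawn) in
  fuel_zone b k /\ black_in_fuel b.
Proof.
  intros Pw H1 H3 b. pose proof (sq_sum_nonneg w Pw) as HK. split.
  - intros x y Ho Hz. unfold b, upd.
    destruct ((x =? x3) && (y =? y3))%bool eqn:E3; [apply andb_true_iff in E3; destruct E3 as [E E']; apply Z.eqb_eq in E, E'; lia|].
    destruct ((x =? sq_x w) && (y =? sq_y w))%bool eqn:E2; [apply andb_true_iff in E2; destruct E2 as [E E']; apply Z.eqb_eq in E, E'; lia|].
    destruct ((x =? x1) && (y =? y1))%bool eqn:E1; [apply andb_true_iff in E1; destruct E1 as [E E']; apply Z.eqb_eq in E, E'; lia|].
    apply board_of_fuel; auto.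
  - intros x y e. unfold b, upd.
    destruct ((x =? x3) && (y =? y3))%bool eqn:E3; [intros E; inversion E; subst; simpl; discriminate|].
    destruct ((x =? sq_x w) && (y =? sq_y w))%bool eqn:E2; [discriminate|].
    destruct ((x =? x1) && (y =? y1))%bool eqn:E1; [discriminate|].
    intros He Hb. destruct (board_of_black w k x y e Pw He Hb) as [[-> ->]|[Hz [j (Hj & -> & ->)]]].
    + rewrite !Z.eqb_refl in E2. discriminate.
    + split; [prove_even|lia].
Qed.

Lemma not_spent_up w : is_vertex (fst w) (snd w) -> forall u', (u' = vcol w \/ u' = vcol w + 1) ->
  ~ spent w (fst (edge_sq (snd w) (vcol w) u')) (snd (edge_sq (snd w) (vcol w) u')).
Proof.
  intros Pw u' Hu (a & b & Hanc & Hab & E).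
  assert (E' : edge_sq (snd w) (vcol w) u' = edge_sq (snd a) (vcol a) (vcol b)) by (rewrite <- E; destruct (edge_sq _ _ _); reflexivity).
  destruct (edge_sq_inj _ _ _ _ _ _ Hu (edge_col _ _ Hab) E') as (H1 & _ & _).
  pose proof (edge_height _ _ Hab). pose proof (ancestor_height _ _ Hanc). lia.
Qed.

Lemma red_captures_king_dir w k d : is_vertex (fst w) (snd w) -> 0 <= k -> dy d = -1 ->
  board_of w k (sq_x w - dx d) (sq_y w + 1) = Some rpawn ->
  board_of w k (sq_x w + dx d) (sq_y w - 1) = None ->
  exists q, legal_move (mkPos (board_of w k) Red) q /\ won_for_red q.
Proof.
  intros Pw Hk Hd Hfrom Hto. pose proof (sq_sum_nonneg w Pw) as HK.
  assert (Hdx : dx d = 1 \/ dx d = -1) by (destruct (dir_cases d); lia).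
  eexists. split.
  - left. left. exists (sq_x w - dx d), (sq_y w + 1), rpawn, [d].
    split; [exact Hfrom|]. split; [reflexivity|]. split; [congruence|]. split; [|reflexivity].
    split; [|exact I]. split; [exact Hd|]. split.
    + exists bking. split; [|simpl; congruence].
      replace (sq_x w - dx d + dx d) with (sq_x w) by ring.
      replace (sq_y w + 1 + dy d) with (sq_y w) by lia. apply board_of_king; auto.
    + replace (sq_x w - dx d + 2 * dx d) with (sq_x w + dx d) by ring.
      replace (sq_y w + 1 + 2 * dy d) with (sq_y w - 1) by lia. exact Hto.
  - cbn [opp to_move]. unfold jump_step.
    replace (sq_x w - dx d + dx d) with (sq_x w) by ring.
    replace (sq_y w + 1 + dy d) with (sq_y w) by lia.
    destruct (king_captured_fuel w k (sq_x w - dx d) (sq_y w + 1) (sq_x w - dx d + 2 * dx d)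
                (sq_y w + 1 + 2 * dy d) Pw ltac:(lia) ltac:(lia)) as [Z1 Z2].
    apply won_of_fuel with k; auto.
Qed.

(* The king arrived along an edge whose square below it is now empty; the red
   pawn on the opposite square above it captures it.  That square is the gap
   of [root_gap] only when the king stands at the root of an inner node. *)
Lemma red_captures_king w k : is_vertex (fst w) (snd w) -> w <> ([], 0) ->
  ~ (fst w <> [] /\ addr_inner (fst w) /\ snd w = root_ht (fst w)) -> 0 <= k ->
  exists q, legal_move (mkPos (board_of w k) Red) q /\ won_for_red q.
Proof.
  intros Pw Hn Hnr Hk. destruct w as [τ h].
  destruct (edge_pred_exists τ h Pw Hn) as [τ' Hs]. set (a := (τ', h - 1)) in Hs. set (w := (τ, h)) in *.
  pose proof (spent_last a w Hs) as Cp. pose proof (vcol_nonneg w Pw) as HU0.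
  assert (Hodd : Z.odd (sq_y w - 1) = true).
  { unfold sq_y. replace (2 * snd w - 1) with (2 * (snd w - 1) + 1) by ring. apply odd_2h1. }
  destruct (edge_col _ _ Hs) as [E|E].
  - assert (PE : edge_sq (snd a) (vcol a) (vcol w) = (sq_x w + 1, sq_y w - 1)).
    { unfold edge_sq. rewrite E. replace (vcol a =? vcol a + 1) with false by (symmetry; apply Z.eqb_neq; lia).
      subst a w. unfold sq_x, sq_y, vcol in *. cbn [fst snd] in *. f_equal; lia. }
    assert (PJ : edge_sq (snd w) (vcol w) (vcol w) = (sq_x w - 1, sq_y w + 1)).
    { unfold edge_sq. replace (vcol w =? vcol w + 1) with false by (symmetry; apply Z.eqb_neq; lia).
      unfold sq_x, sq_y. f_equal; lia. }
    rewrite PE in Cp. cbn [fst snd] in Cp.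
    apply (red_captures_king_dir w k SE); auto; cbn [dx].
    + apply board_of_edge_red; [unfold sq_x, sq_y; prove_even|unfold sq_x, sq_y; lia|apply odd_2h1| |].
      * pose proof (not_spent_up w Pw (vcol w) (or_introl eq_refl)) as N. rewrite PJ in N. exact N.
      * intros D. destruct (root_gap_edge _ _ w (vcol w) Pw (or_introl eq_refl) D (eq_sym PJ)) as (_ & _ & _ & X).
        lia.
    + apply board_of_spent; auto; [unfold sq_x, sq_y; prove_even|unfold sq_x, sq_y; lia].
  - assert (PE : edge_sq (snd a) (vcol a) (vcol w) = (sq_x w - 1, sq_y w - 1)).
    { unfold edge_sq. rewrite E, Z.eqb_refl. subst a w. unfold sq_x, sq_y, vcol in *. cbn [fst snd] in *. f_equal; lia. }
    assert (PJ : edge_sq (snd w) (vcol w) (vcol w + 1) = (sq_x w + 1, sq_y w + 1)).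
    { unfold edge_sq. rewrite Z.eqb_refl. unfold sq_x, sq_y. f_equal; lia. }
    rewrite PE in Cp. cbn [fst snd] in Cp.
    apply (red_captures_king_dir w k SW); auto; cbn [dx]; replace (sq_x w - -1) with (sq_x w + 1) by ring.
    + apply board_of_edge_red; [unfold sq_x, sq_y; prove_even|unfold sq_x, sq_y; lia|apply odd_2h1| |].
      * pose proof (not_spent_up w Pw (vcol w + 1) (or_intror eq_refl)) as N. rewrite PJ in N. exact N.
      * intros D. destruct (root_gap_edge _ _ w (vcol w + 1) Pw (or_intror eq_refl) D (eq_sym PJ))
          as (X1 & X2 & X3 & _). apply Hnr. auto.
    + apply board_of_spent; auto; [unfold sq_x, sq_y; prove_even|unfold sq_x, sq_y; lia].
Qed.

Lemma board_of_red w k x y pc : board_of w k x y = Some pc -> pcol pc = Red -> pc = rpawn.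
Proof.
  unfold board_of. destruct (Z.odd (x + y)); [discriminate|].
  destruct (Z_le_dec (x + y) (-8)).
  - unfold fuel_sq. destruct (dec _); [intros E; inversion E; subst; discriminate|].
    destruct (dec _); [discriminate|]. intros E; inversion E; auto.
  - destruct (dec (vertex_sq x y)).
    + destruct (dec _); [intros E; inversion E; subst; discriminate|discriminate].
    + destruct (dec _); [discriminate|]. destruct (dec _); [discriminate|]. intros E; inversion E; auto.
Qed.

Lemma root_gap_sum x y : root_gap x y -> (x + y) mod 4 = 2 /\ 0 <= x + y.
Proof.
  intros (τ & Hn & Hl & -> & ->). pose proof (inner_root_vertex τ Hn Hl) as P.
  pose proof (col_nonneg τ (root_ht τ) (is_vertex_on_path _ _ P)).
  split; [|lia]. Z.div_mod_to_equations. lia.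
Qed.

Lemma board_of_root_gap w k x y : root_gap x y -> board_of w k x y = None.
Proof.
  intros D. pose proof (root_gap_sum x y D) as [H1 H2]. pose proof (root_gap_odd_row x y D) as Hy.
  assert (Ho : Z.odd (x + y) = false) by (apply odd_false_of_mod; Z.div_mod_to_equations; lia).
  rewrite board_of_nonvertex; auto; [|lia|apply odd_row_not_vertex; auto].
  destruct (dec (spent w x y)); [reflexivity|]. destruct (dec (root_gap x y)); [reflexivity|contradiction].
Qed.

Lemma root_edge_pred τ : τ <> [] -> addr_inner τ ->
  edge (τ, root_ht τ - 1) (τ, root_ht τ) /\ col τ (root_ht τ - 1) = col τ (root_ht τ) - 1.
Proof.
  intros Hn Hl. destruct τ as [|b σ _] using rev_ind; [congruence|].
  pose proof (branch_ht_lt_root_ht σ b). pose proof (inner_root_vertex _ Hn Hl) as P.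
  split.
  - unfold edge; cbn [fst snd]. split; [|split; [auto|split; [lia|left; auto]]].
    split; [apply P|]. split; [right; split; auto; lia|left; lia].
  - rewrite col_connector by lia. rewrite col_ray by lia. rewrite col_ray_at_root. ring.
Qed.

(* The king reached the inner root from the lower left. *)
Lemma board_of_inner_root_se τ k : τ <> [] -> addr_inner τ ->
  board_of (τ, root_ht τ) k (sq_x (τ, root_ht τ) + 1) (sq_y (τ, root_ht τ) - 1) = Some rpawn.
Proof.
  intros Hn Hl. set (w := (τ, root_ht τ)).
  assert (Pw : is_vertex (fst w) (snd w)) by (apply inner_root_vertex; auto).
  pose proof (vcol_nonneg w Pw) as HU0.
  apply board_of_edge_red; [unfold sq_x, sq_y; prove_even | unfold sq_x, sq_y; lia
                           | unfold sq_y; replace (2 * snd w - 1) with (2 * (snd w - 1) + 1) by ring; apply odd_2h1 | |].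
  - intros (a & b & Hanc & Hab & E).
    destruct (root_edge_pred τ Hn Hl) as [Rs RU].
    assert (E' : edge_sq (root_ht τ - 1) (col τ (root_ht τ)) (col τ (root_ht τ)) = edge_sq (snd a) (vcol a) (vcol b)).
    { rewrite <- E. unfold edge_sq.
      replace (col τ (root_ht τ) =? col τ (root_ht τ) + 1) with false by (symmetry; apply Z.eqb_neq; lia).
      unfold sq_x, sq_y, w, vcol; cbn [fst snd]. f_equal; lia. }
    destruct (edge_sq_inj _ _ _ _ _ _ (or_introl eq_refl) (edge_col _ _ Hab) E') as (F1 & F2 & F3).
    pose proof (edge_height _ _ Hab) as Hh.
    assert (b = w).
    { apply vertex_eq; [eapply edge_vertex_r; eauto|auto|unfold w; cbn [snd]; lia|unfold w, vcol in *; cbn [fst snd]; lia]. }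
    subst b. pose proof (edge_pred_unique _ _ _ Hab Rs) as ->. unfold vcol in F2; cbn [fst snd] in F2. lia.
  - intros D. pose proof (root_gap_sum _ _ D) as [D1 _]. unfold sq_x, sq_y in D1.
    Z.div_mod_to_equations. lia.
Qed.

Lemma red_first_jump τ k x y pc d : τ <> [] -> addr_inner τ -> 0 <= k ->
  board_of (τ, root_ht τ) k x y = Some pc -> pcol pc = Red -> jump_ok pc (board_of (τ, root_ht τ) k, x, y) d ->
  x = -13 - 2 * k /\ y = 2 * k + 1 /\ d = SE /\ pc = rpawn.
Proof.
  intros Hn Hl Hk H1 H2 J. set (w := (τ, root_ht τ)) in *.
  assert (Pw : is_vertex (fst w) (snd w)) by (apply inner_root_vertex; auto).
  pose proof (board_of_red _ _ _ _ _ H1 H2) as ->.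
  destruct J as (Hp & (e & He & Hc) & HL). unfold permitted, rpawn in Hp; cbn [pkind pcol] in Hp.
  assert (Hb : pcol e = Black) by (destruct (pcol e); [auto|simpl in Hc; congruence]).
  pose proof (vcol_nonneg w Pw) as HU0.
  destruct (dir_cases d) as [[E1 E2]|[[E1 E2]|[[E1 E2]|[E1 E2]]]]; try (exfalso; rewrite E2 in Hp; lia).
  - rewrite E1, E2 in *.
    destruct (board_of_black w k _ _ e Pw He Hb) as [[X Y]|[Hz [j (Hj & X & Y)]]].
    + exfalso. assert (Hx : x = sq_x w - 1) by lia. assert (Hy : y = sq_y w + 1) by lia. subst x y.
      replace (sq_x w - 1 + 2 * 1) with (sq_x w + 1) in HL by ring.
      replace (sq_y w + 1 + 2 * -1) with (sq_y w - 1) in HL by ring.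
      pose proof (board_of_inner_root_se τ k Hn Hl) as R. fold w in R. congruence.
    + assert (Hj' : j = k).
      { destruct (Z.eq_dec j k) as [|Hne]; auto. exfalso.
        rewrite board_of_fuel in HL by first [prove_even|lia].
        rewrite fuel_sq_red in HL; [discriminate| intros j' [J1 J2]; lia| intros [J1 J2]; lia]. }
      subst j. split; [lia|]. split; [lia|]. split; [|reflexivity].
      destruct d; simpl in E1, E2; try lia; reflexivity.
  - exfalso. rewrite E1, E2 in *.
    destruct (board_of_black w k _ _ e Pw He Hb) as [[X Y]|[Hz [j (Hj & X & Y)]]].
    + assert (Hx : x = sq_x w + 1) by lia. assert (Hy : y = sq_y w + 1) by lia. subst x y.
      rewrite board_of_root_gap in H1; [discriminate|]. exists τ. split; [exact Hn|]. split; [exact Hl|].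
      unfold sq_x, sq_y, w, vcol; cbn [fst snd]. split; lia.
    + rewrite board_of_fuel in HL by first [prove_even|lia].
      rewrite fuel_sq_red in HL; [discriminate| intros j' [J1 J2]; lia| intros [J1 J2]; lia].
Qed.

Lemma red_forced_fuel τ k q : τ <> [] -> addr_inner τ -> 0 <= k ->
  legal_move (mkPos (board_of (τ, root_ht τ) k) Red) q -> q = mkPos (board_of (τ, root_ht τ) (k + 1)) Black.
Proof.
  intros Hn Hl Hk Hq. set (w := (τ, root_ht τ)) in *.
  assert (Pw : is_vertex (fst w) (snd w)) by (apply inner_root_vertex; auto).
  assert (Second : forall d2, ~ jump_ok rpawn (fuel_step (board_of w k) k, -11 - 2 * k, 2 * k - 1) d2).
  { intros d2 (Hp & (e & He & Hc) & _). unfold permitted, rpawn in Hp; cbn [pkind pcol] in Hp.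
    assert (Hb : pcol e = Black) by (destruct (pcol e); [auto|simpl in Hc; congruence]).
    rewrite fuel_step_board_of in He by auto.
    destruct (board_of_black w (k + 1) _ _ e Pw He Hb) as [[X Y]|[Hz [j (Hj & X & Y)]]].
    - pose proof (sq_sum_nonneg w Pw). destruct (dir_cases d2) as [[E1 E2]|[[E1 E2]|[[E1 E2]|[E1 E2]]]]; lia.
    - destruct (dir_cases d2) as [[E1 E2]|[[E1 E2]|[[E1 E2]|[E1 E2]]]]; lia. }
  destruct Hq as [[Hf|Hi]|[Hn' _]].
  - destruct Hf as (x & y & pc & ds & H1 & H2 & Hne & J & Hq). cbn [brd to_move] in *.
    destruct ds as [|d ds]; [congruence|]. destruct J as [J Js].
    destruct (red_first_jump τ k x y pc d Hn Hl Hk H1 H2 J) as (-> & -> & -> & ->).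
    destruct ds as [|d2 ds].
    + cbn [jumps_result fold_left] in Hq. unfold jumps_result in Hq. cbn [fold_left] in Hq.
      change (jump_step rpawn (board_of w k, -13 - 2 * k, 2 * k + 1) SE) with
        (fuel_step (board_of w k) k, -13 - 2 * k + 2 * dx SE, 2 * k + 1 + 2 * dy SE) in Hq.
      rewrite fuel_step_board_of in Hq by auto. exact Hq.
    + exfalso. destruct Js as [J2 _].
      change (jump_step rpawn (board_of w k, -13 - 2 * k, 2 * k + 1) SE) with
        (fuel_step (board_of w k) k, -13 - 2 * k + 2 * dx SE, 2 * k + 1 + 2 * dy SE) in J2.
      cbn [dx dy] in J2. replace (-13 - 2 * k + 2 * 1) with (-11 - 2 * k) in J2 by ring.
      replace (2 * k + 1 + 2 * -1) with (2 * k - 1) in J2 by ring. eapply Second; eauto.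
  - exfalso. destruct Hi as (x & y & pc & s & H1 & H2 & J & _). cbn [brd to_move] in *.
    pose proof (J 0%nat) as J0. cbn [jiter] in J0.
    destruct (red_first_jump τ k x y pc (s 0%nat) Hn Hl Hk H1 H2 J0) as (-> & -> & E0 & ->).
    pose proof (J 1%nat) as J1. cbn [jiter] in J1. rewrite E0 in J1.
    change (jump_step rpawn (board_of w k, -13 - 2 * k, 2 * k + 1) SE) with
      (fuel_step (board_of w k) k, -13 - 2 * k + 2 * dx SE, 2 * k + 1 + 2 * dy SE) in J1.
    cbn [dx dy] in J1. replace (-13 - 2 * k + 2 * 1) with (-11 - 2 * k) in J1 by ring.
    replace (2 * k + 1 + 2 * -1) with (2 * k - 1) in J1 by ring. eapply Second; eauto.
  - exfalso. apply Hn'. exists (mkPos (fuel_step (board_of w k) k) Black). apply fuel_jump; auto. apply board_of_fuel_zone.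
Qed.

(** * The value of a position *)

Definition black_at τ k := mkPos (board_of (τ, root_ht τ) k) Black.

Lemma root_vertex τ : addr_inner τ -> is_vertex τ (root_ht τ).
Proof.
  intros Hl. destruct (list_eq_dec Nat.eq_dec τ []) as [->|Hn].
  - split; [apply addr_inner_valid; auto|]. split; [left; rewrite root_ht_nil; split; auto; lia|right; auto].
  - apply inner_root_vertex; auto.
Qed.

Lemma root_edge τ : addr_inner τ -> edge (τ, root_ht τ) (τ, root_ht τ + 1).
Proof.
  intros Hl. pose proof (root_vertex τ Hl) as P. unfold edge; cbn [fst snd].
  split; auto. split; [|split; [auto|left; auto]].
  split; [apply addr_inner_valid; auto|]. split; [|right; auto].
  destruct P as [_ [[[E H]|[E H]] _]]; [left; split; auto; lia|right; split; auto; lia].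
Qed.

Lemma black_at_not_won τ k : addr_inner τ -> ~ won_for_red (black_at τ k).
Proof.
  intros Hl [_ Hw]. apply Hw. destruct (king_has_jump (τ, root_ht τ) k _ (root_edge τ Hl)) as [q Hq].
  exists q. left. exact Hq.
Qed.

Lemma child_root_vertex τ b : addr_valid (τ ++ [b]) -> is_vertex (τ ++ [b]) (root_ht (τ ++ [b])).
Proof.
  intros V. split; auto. split; [|left; lia].
  right. split; [destruct τ; discriminate|]. pose proof (branch_ht_lt_root_ht τ b). lia.
Qed.

Lemma root_reach_root σ ρ : addr_inner σ -> ρ <> [] -> is_vertex (σ ++ ρ) (root_ht (σ ++ ρ)) ->
  reach (σ, root_ht σ) (σ ++ ρ, root_ht (σ ++ ρ)).
Proof.
  intros Hl Hρ Pv. destruct ρ as [|c ρ]; [congruence|]. apply ancestor_reach.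
  - split; [apply root_vertex; auto|]. split; [exact Pv|]. right. exists c, ρ. cbn [fst snd].
    split; auto. pose proof (root_ht_lt_branch_ht σ c). lia.
  - intros E. apply pair_equal_spec in E. destruct E as [E _]. apply (f_equal (@length nat)) in E.
    rewrite length_app in E. simpl in E. lia.
Qed.

Lemma reach_not_origin u v : reach u v -> v <> ([], 0).
Proof.
  intros Hr ->. destruct (reach_ancestor _ _ Hr) as [Ha Hne].
  destruct (ancestor_height _ _ Ha) as [H1 H2]. destruct Ha as [[_ [G _]] _].
  pose proof (on_path_nonneg _ _ G). cbn [snd] in *. apply Hne, H2. lia.
Qed.

Definition black_at_has_value d := forall τ k, subtree c0 τ = Some d -> has_child d -> 0 <= k ->
  red_value (embed d) (black_at τ k).

Section Induction_step.

Variables (d : CTree) (τ : list nat) (k : Z).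
Hypothesis IH : forall n d', child d n = Some d' -> black_at_has_value d'.
Hypothesis Hsub : subtree c0 τ = Some d.
Hypothesis Hd : has_child d.
Hypothesis Hk : 0 <= k.

Lemma red_wins_at_inner_root b ρ : addr_inner (τ ++ b :: ρ) ->
  red_wins_by (embed d) (mkPos (board_of (τ ++ b :: ρ, root_ht (τ ++ b :: ρ)) k) Red).
Proof.
  intros [d'' [Hl'' Hd'']].
  destruct (subtree c0 (τ ++ [b])) as [d'|] eqn:Eb.
  2: { exfalso. rewrite app_cons_snoc, subtree_app_None in Hl''; [discriminate|auto]. }
  assert (Hchild : child d b = Some d') by (rewrite subtree_snoc, Hsub in Eb; exact Eb).
  assert (Hlt : olt (embed d') (embed d)).
  { pose proof (proj1 (embed_child_sup d) b d' Hchild) as Hs. apply ole_inv in Hs. exact Hs. }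
  destruct ρ as [|c ρ].
  - assert (d'' = d') by congruence. subst d''.
    destruct (IH b d' Hchild (τ ++ [b]) (k + 1) Eb Hd'' ltac:(lia)) as [W _].
    apply win_by_red_move with (black_at (τ ++ [b]) (k + 1)) (embed d'); [apply not_won_red|reflexivity| |exact W|exact Hlt].
    unfold black_at. rewrite <- fuel_step_board_of by auto. apply fuel_legal; [auto|apply board_of_fuel_zone].
  - (* From the root of the child, Black could move to the same square. *)
    assert (Hd' : has_child d').
    { assert (V : addr_valid ((τ ++ [b]) ++ [c])).
      { apply addr_valid_prefix with ρ. rewrite <- app_assoc. cbn. rewrite <- app_cons_snoc. exists d''. auto. }
      destruct (addr_valid_parent _ _ V) as [d0 [E0 K0]]. rewrite Eb in E0. inversion E0; subst; auto. }
    assert (Hl' : addr_inner (τ ++ [b])) by (exists d'; auto).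
    destruct (IH b d' Hchild (τ ++ [b]) k Eb Hd' Hk) as [W _].
    apply red_wins_by_mono with (embed d'); [|apply olt_ole; auto].
    apply (red_wins_by_black_inv _ _ W eq_refl (black_at_not_won _ _ Hl')).
    left. replace (τ ++ b :: c :: ρ) with ((τ ++ [b]) ++ c :: ρ) by (rewrite <- app_assoc; reflexivity).
    apply king_reach_jump, root_reach_root; [auto|congruence|].
    rewrite <- app_assoc. apply root_vertex. exists d''. exact (conj Hl'' Hd'').
Qed.

Lemma black_at_upper : red_wins_by (embed d) (black_at τ k).
Proof.
  assert (Hl : addr_inner τ) by (exists d; auto).
  assert (Hpos : olt OZ (embed d)).
  { pose proof (embed_has_child d Hd) as Hs. apply ole_inv in Hs. exact Hs. }
  apply win_by_black_moves; [apply black_at_not_won; auto|reflexivity|].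
  intros q Hq.
  destruct (black_moves (τ, root_ht τ) k q (root_vertex τ Hl) (ex_intro _ _ (root_edge τ Hl)) Hq)
    as [[v [Hr ->]]|(Ht & Hz & Hb)].
  - destruct (classic (fst v <> [] /\ addr_inner (fst v) /\ snd v = root_ht (fst v)))
      as [(Hn & Hv & Hh)|Hunsafe].
    + destruct (reach_ancestor _ _ Hr) as [(_ & _ & [[E _]|[b [ρ [E _]]]]) Hne];
        destruct v as [τ' h']; cbn [fst snd] in *; subst.
      * contradiction.
      * apply red_wins_at_inner_root; auto.
    + destruct (reach_ancestor _ _ Hr) as [Ha _].
      destruct (red_captures_king v k (ancestor_vertex_r _ _ Ha) (reach_not_origin _ _ Hr) Hunsafe Hk)
        as [q' [Hq' Hw']].
      eapply red_wins_by_move_to_won; eauto.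
  - destruct q as [bq tq]. cbn [to_move brd] in *. subst tq.
    destruct (red_wins_after_king_gone bq k Hk Hz Hb) as [q' [Hq' Hw']].
    eapply red_wins_by_move_to_won; eauto.
Qed.

Lemma black_at_lower c : red_wins_by c (black_at τ k) -> ole (embed d) c.
Proof.
  intros Hc. assert (Hl : addr_inner τ) by (exists d; auto).
  apply (proj2 (embed_child_sup d)). intros n d' Hchild.
  assert (Eb : subtree c0 (τ ++ [n]) = Some d') by (rewrite subtree_snoc, Hsub; exact Hchild).
  assert (Lg : legal_move (black_at τ k) (mkPos (board_of (τ ++ [n], root_ht (τ ++ [n])) k) Red)).
  { left. apply king_reach_jump, root_reach_root; [auto|congruence|].
    apply child_root_vertex. exists d'. auto. }
  pose proof (red_wins_by_black_inv _ _ Hc eq_refl (black_at_not_won _ _ Hl) _ Lg) as W1.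
  destruct (red_wins_by_red_inv _ _ W1 eq_refl) as (q' & b & Hq' & Wb & Hbc).
  constructor. destruct (classic (has_child d')) as [Hd'|Hd'].
  - assert (Hn : τ ++ [n] <> []) by (destruct τ; discriminate).
    rewrite (red_forced_fuel (τ ++ [n]) k q' Hn (ex_intro _ d' (conj Eb Hd')) Hk Hq') in Wb.
    destruct (IH n d' Hchild (τ ++ [n]) (k + 1) Eb Hd' ltac:(lia)) as [_ Hmin].
    eapply ole_olt_trans; [apply Hmin; exact Wb|exact Hbc].
  - eapply ole_olt_trans; [|exact Hbc]. eapply ole_trans; [apply embed_childless; auto|apply ole_zero].
Qed.

End Induction_step.

Lemma black_at_value : forall d, black_at_has_value d.
Proof.
  apply child_ind. intros d IH τ k Hsub Hd Hk. split.
  - apply black_at_upper; auto.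
  - intros c. apply black_at_lower; auto.
Qed.

End Tree.

Lemma empty_board_won : won_for_red (mkPos (fun _ _ => None) Black).
Proof.
  split; [reflexivity|]. intros [q [[Hf|Hi]|[_ Hs]]].
  - destruct Hf as (x & y & pc & _ & H & _). discriminate.
  - destruct Hi as (x & y & pc & _ & H & _). discriminate.
  - destruct Hs as (x & y & pc & _ & H & _). discriminate.
Qed.

Lemma ctree_value c : exists p, valid_pos p /\ red_value (embed c) p.
Proof.
  destruct (classic (has_child c)) as [Hc|Hc].
  - exists (black_at c [] 0). split.
    + intros x y Ho. apply board_of_light; auto.
    + apply (black_at_value c c [] 0); auto; lia.
  - exists (mkPos (fun _ _ => None) Black). split; [intros x y _; reflexivity|].
    split; [apply win_now, empty_board_won|]. intros b _. eapply ole_trans; [apply embed_childless; auto|apply ole_zero].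
Qed.

Theorem theorem2 :
  forall a : Ord, countable_ordinal a ->
  exists p : position, valid_pos p /\ has_value p a.
Proof.
  intros a [c Hc]. destruct (ctree_value c) as [p [Hp Hv]].
  exists p. split; auto. exists red_value. split; [apply red_value_solution|].
  apply red_value_oeq with (embed c); auto. split; apply Hc.
Qed.
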